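(* ($\mathsf{Idx}$-normalization.) Let $\mathtt E$ be a closed term with $\vdash\mathtt E:\mathsf{Idx}$ derivable. (1) $\mathtt E\Downarrow^1\underline n$ for some numeral $\underline n$. (2) If $\mathsf{Circ}(\mathtt E)$ occurs in a valid type derivation, then $\mathtt E\Downarrow^1\underline n$ for some numeral $\underline n$.
   Context: qPCF. Gates: $\mathcal U=\bigcup_k\mathcal U(k)$, $\mathtt U\in\mathcal U(k)$ acts on $k+1$ qubits; $\ddagger$ is a fixed total arity-preserving map on gate names. Raw terms: $\mathtt{M},\mathtt{N},\mathtt{P},\mathtt{Q},\mathtt{E}::=\mathtt{x}\mid\lambda\mathtt{x}^\sigma.\mathtt{M}\mid\mathtt{M}\mathtt{N}\mid\underline{n}\mid\mathtt{pred}\mid\mathtt{succ}\mid\mathtt{if}\mid\mathtt{Y}_\sigma\mid\mathtt{set}\mid\mathtt{get}\mid\mathtt{U}\mid{::}\mid{\parallel}\mid\mathtt{iter}\mid\mathtt{reverse}\mid\odot\mathtt{E}\mathtt{E}'\ (\odot\in\{+,*\})\mid\mathtt{size}\mid\mathtt{dMeas}$, with infix $::$, $\parallel$, $+$. Types $\sigma::=\mathsf{Nat}\mid\mathsf{Idx}\mid\mathsf{Circ}(\mathtt E)\mid\Pi\mathtt x^\sigma.\tau$; $\sigma\to\tau$ is a non-dependent $\Pi$. Bases $B$: finite variable-to-type assignments with distinct variables. $\mathrm{sC}(B,\mathsf{Nat})=\mathrm{sC}(B,\mathsf{Idx})=\emptyset$, $\mathrm{sC}(B,\mathsf{Circ}(\mathtt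 E))=\{B\vdash\mathtt E:\mathsf{Idx}\}$, $\mathrm{sC}(B,\Pi\mathtt x^\sigma.\tau)=\mathrm{sC}(B,\sigma)\cup\mathrm{sC}(B\cup\{\mathtt x:\sigma\},\tau)$, extended to sets by union; $\mathrm{WF}(B,S)$ means all typings in $\mathrm{sC}(B,S)$ are derivable. Typing rules: (P0) $\mathrm{WF}(B,\mathrm{codom}(B)\cup\{\sigma\})\Rightarrow B\cup\{\mathtt x:\sigma\}\vdash\mathtt x:\sigma$; (P1) $B\cup\{\mathtt x:\sigma\}\vdash\mathtt N:\tau\Rightarrow B\vdash\lambda\mathtt x^\sigma.\mathtt N:\Pi\mathtt x^\sigma.\tau$; (P2) $B\vdash\mathtt P:\Pi\mathtt x^\sigma.\tau$, $B\vdash\mathtt Q:\sigma\Rightarrow B\vdash\mathtt{PQ}:\tau[\mathtt Q/\mathtt x]$; given $\mathrm{WF}(B,\mathrm{codom}(B))$: $\mathtt{succ},\mathtt{pred}:\mathsf{Nat}\to\mathsf{Nat}$, $\mathtt{if}:\mathsf{Nat}\to\mathsf{Nat}\to\mathsf{Nat}\to\mathsf{Nat}$, $\mathtt{get},\mathtt{set}:\mathsf{Nat}\to\mathsf{Nat}\to\mathsf{Nat}$, $\underline n:\mathsf{Idx}$, $\mathtt U:\mathsf{Circ}(\underline k)$ for $\mathtt U\in\mathcal U(k)$; (P5') $B\vdash\mathtt E:\mathsf{Idx}\Rightarrow B\vdash\mathtt{if}:\mathsf{Nat}\to\mathsf{Circ}(\mathtt E)\to\mathsf{Circ}(\mathtt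 E)\to\mathsf{Circ}(\mathtt E)$; (P6) $\sigma=\tau_1\to\cdots\to\tau_n\to\gamma$, $\gamma\in\{\mathsf{Nat},\mathsf{Circ}(\mathtt E)\}$, $\mathrm{WF}(B,\mathrm{codom}(B)\cup\{\sigma\})\Rightarrow B\vdash\mathtt Y_\sigma:(\sigma\to\sigma)\to\sigma$; (I0) $B\vdash\mathtt M:\mathsf{Idx}\Rightarrow B\vdash\mathtt M:\mathsf{Nat}$; (I2) $B\vdash\mathtt E_0,\mathtt E_1:\mathsf{Idx}\Rightarrow B\vdash\odot\mathtt E_0\mathtt E_1:\mathsf{Idx}$; (I3) $B\vdash\mathtt M:\mathsf{Circ}(\mathtt E)\Rightarrow B\vdash\mathtt{size}\,\mathtt M:\mathsf{Idx}$; given $B\vdash\mathtt E,\mathtt E_0,\mathtt E_1:\mathsf{Idx}$: ${::}:\mathsf{Circ}(\mathtt E)\to\mathsf{Circ}(\mathtt E)\to\mathsf{Circ}(\mathtt E)$, ${\parallel}:\mathsf{Circ}(\mathtt E_0)\to\mathsf{Circ}(\mathtt E_1)\to\mathsf{Circ}(\mathtt E_0+\mathtt E_1+\underline1)$, $\mathtt{reverse}:\mathsf{Circ}(\mathtt E)\to\mathsf{Circ}(\mathtt E)$, $\mathtt{iter}:\Pi\mathtt x^{\mathsf{Idx}}.\mathsf{Circ}(\mathtt E_0)\to\mathsf{Circ}(\mathtt E_1)\to\mathsf{Circ}(\mathtt E_0+((\underline1+\mathtt E_1)*\mathtt x))$, $\mathtt{dMeas}:\mathsf{Nat}\to\mathsf{Circ}(\mathtt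 E)\to\mathsf{Nat}$. Types are identified modulo $\alpha$, $\beta$-convertibility of terms in types, and ring laws of $+,*$ with $0,1$. A valid type derivation is a finite derivation built with these rules. Evaluation $\mathtt M\Downarrow^\alpha\mathtt V$ ($\mathtt M$ closed of ground type, $0<\alpha\le1$, $\mathtt V$ a numeral or a term built from gate names with $::,\parallel$) is the big-step call-by-name relation: $\underline n\Downarrow^1\underline n$; $\mathtt{succ}$/$\mathtt{pred}$ evaluate their argument and add/subtract one; $(\lambda\mathtt x.\mathtt M)\mathtt N\vec{\mathtt P}\Downarrow^\alpha\mathtt V$ if $\mathtt M[\mathtt N/\mathtt x]\vec{\mathtt P}\Downarrow^\alpha\mathtt V$; $\mathtt{if}\,\mathtt M\mathtt L\mathtt R\Downarrow^{\alpha\alpha'}\mathtt V$ if $\mathtt M\Downarrow^\alpha\underline0,\mathtt L\Downarrow^{\alpha'}\mathtt V$ or $\mathtt M\Downarrow^\alpha\underline{n+1},\mathtt R\Downarrow^{\alpha'}\mathtt V$; $\mathtt Y\mathtt M\vec{\mathtt P}\Downarrow^\alpha\mathtt V$ if $\mathtt M(\mathtt Y\mathtt M)\vec{\mathtt P}\Downarrow^\alpha\mathtt V$; $\mathtt{size}\,\mathtt M\Downarrow^\alpha\underline n$ if $\vdash\mathtt M:\mathsf{Circ}(\mathtt E)$ and $\mathtt E\Downarrow^\alpha\underline n$; $\odot\mathtt E_0\mathtt E_1\Downarrow^{\alpha\alpha'}\underline{m\odot n}$ if $\mathtt E_0\Downarrow^\alpha\underline m,\mathtt E_1\Downarrow^{\alpha'}\underline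 n$; $\mathtt{get}\,\mathtt M\mathtt N$ / $\mathtt{set}\,\mathtt M\mathtt N$ evaluate both arguments to $\underline m,\underline n$ (probabilities multiplied) and return the $n$-th binary digit of $m$ / $m$ with that digit set to $1$; $\mathtt U\Downarrow^\alpha\mathtt U$; $::$, $\parallel$ evaluate components; $\mathtt{reverse}$ replaces gates by their $\ddagger$-image and reverses sequential order; $\mathtt{iter}\,\mathtt E\mathtt M_0\mathtt M_1\Downarrow\mathtt C_1\parallel\cdots\parallel\mathtt C_1\parallel\mathtt C_0$ ($n$ copies, $\mathtt E\Downarrow\underline n$); $\mathtt{dMeas}\,\mathtt M\mathtt N\Downarrow^{\alpha\alpha'\alpha''}\underline n$ if $\mathtt M\Downarrow^\alpha\underline m$, $\mathtt N\Downarrow^{\alpha'}\mathtt C$, $\vdash\mathtt N:\mathsf{Circ}(\underline k)$ and $\underline n$ is a quantum measurement outcome of the circuit $\mathtt C$ on input $m$, obtained with probability $\alpha''$. *)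

From Stdlib Require Import List Arith PeanoNat Reals Permutation Relations.
Import ListNotations.

(* Bound variables are de Bruijn indices (BVar), free variables are    *)
(* names (FVar x, x : nat); hence alpha-equivalence is syntactic eq.   *)

Inductive op : Type := OPlus | OTimes.

Definition opfun (o : op) : nat -> nat -> nat :=
  match o with OPlus => Nat.add | OTimes => Nat.mul end.

Inductive term (G : Type) : Type :=
| BVar : nat -> term G
| FVar : nat -> term G
| Lam : ty G -> term G -> term G
| App : term G -> term G -> term G
| Num : nat -> term G
| Pred : term G
| Succ : term G
| If : term G
| Yc : ty G -> term G
| SetB : term G
| GetB : term G
| Gate : G -> term G
| Seq : term G
| Par : term G
| Iter : term G
| Reverse : term G
| Op : op -> term G -> term G -> term G
| Size : term G
| DMeas : term G
with ty (G : Type) : Type :=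
| TNat : ty G
| TIdx : ty G
| TCirc : term G -> ty G
| TPi : ty G -> ty G -> ty G.             (* Pi x^sigma. tau (tau binds index 0) *)

Arguments BVar {G}. Arguments FVar {G}. Arguments Lam {G}. Arguments App {G}.
Arguments Num {G}. Arguments Pred {G}. Arguments Succ {G}. Arguments If {G}.
Arguments Yc {G}. Arguments SetB {G}. Arguments GetB {G}. Arguments Gate {G}.
Arguments Seq {G}. Arguments Par {G}. Arguments Iter {G}. Arguments Reverse {G}.
Arguments Op {G}. Arguments Size {G}. Arguments DMeas {G}.
Arguments TNat {G}. Arguments TIdx {G}. Arguments TCirc {G}. Arguments TPi {G}.

Definition Arr {G : Type} (a b : ty G) : ty G := TPi a b.

Fixpoint open_t {G : Type} (k : nat) (u : term G) (t : term G) : term G :=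
  match t with
  | BVar i => if Nat.eqb i k then u else BVar i
  | Lam s M => Lam (open_ty k u s) (open_t (S k) u M)
  | App M N => App (open_t k u M) (open_t k u N)
  | Yc s => Yc (open_ty k u s)
  | Op o a b => Op o (open_t k u a) (open_t k u b)
  | t => t
  end
with open_ty {G : Type} (k : nat) (u : term G) (s : ty G) : ty G :=
  match s with
  | TCirc E => TCirc (open_t k u E)
  | TPi a b => TPi (open_ty k u a) (open_ty (S k) u b)
  | s => s
  end.

Fixpoint fv_t {G : Type} (t : term G) : list nat :=
  match t with
  | FVar x => [x]
  | Lam s M => fv_ty s ++ fv_t M
  | App M N => fv_t M ++ fv_t N
  | Yc s => fv_ty s
  | Op _ a b => fv_t a ++ fv_t b
  | _ => []
  end
with fv_ty {G : Type} (s : ty G) : list nat :=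
  match s with
  | TCirc E => fv_t E
  | TPi a b => fv_ty a ++ fv_ty b
  | _ => []
  end.

Fixpoint lc_t {G : Type} (k : nat) (t : term G) : Prop :=
  match t with
  | BVar i => i < k
  | Lam s M => lc_ty k s /\ lc_t (S k) M
  | App M N => lc_t k M /\ lc_t k N
  | Yc s => lc_ty k s
  | Op _ a b => lc_t k a /\ lc_t k b
  | _ => True
  end
with lc_ty {G : Type} (k : nat) (s : ty G) : Prop :=
  match s with
  | TCirc E => lc_t k E
  | TPi a b => lc_ty k a /\ lc_ty (S k) b
  | _ => True
  end.

Definition closed {G : Type} (t : term G) : Prop := fv_t t = [] /\ lc_t 0 t.

(* Identification of types: alpha (syntactic here), beta-convertibility *)
(* of terms occurring in types, and the commutative-semiring laws of    *)
(* +, * with 0, 1 (plus evaluation of numeral arithmetic).   *)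

Inductive ring_ax {G : Type} : term G -> term G -> Prop :=
| RA_addA a b c : ring_ax (Op OPlus (Op OPlus a b) c) (Op OPlus a (Op OPlus b c))
| RA_addC a b : ring_ax (Op OPlus a b) (Op OPlus b a)
| RA_add0 a : ring_ax (Op OPlus (Num 0) a) a
| RA_mulA a b c : ring_ax (Op OTimes (Op OTimes a b) c) (Op OTimes a (Op OTimes b c))
| RA_mulC a b : ring_ax (Op OTimes a b) (Op OTimes b a)
| RA_mul1 a : ring_ax (Op OTimes (Num 1) a) a
| RA_mul0 a : ring_ax (Op OTimes (Num 0) a) (Num 0)
| RA_distr a b c :
    ring_ax (Op OTimes a (Op OPlus b c)) (Op OPlus (Op OTimes a b) (Op OTimes a c))
| RA_num o m n : ring_ax (Op o (Num m) (Num n)) (Num (opfun o m n)).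

Inductive tstep {G : Type} : term G -> term G -> Prop :=
| S_beta s M N : tstep (App (Lam s M) N) (open_t 0 N M)
| S_ax a b : ring_ax a b -> tstep a b
| S_lam1 s s' M : tystep s s' -> tstep (Lam s M) (Lam s' M)
| S_lam2 s M M' x : ~ In x (fv_t M) -> ~ In x (fv_t M') ->
    tstep (open_t 0 (FVar x) M) (open_t 0 (FVar x) M') -> tstep (Lam s M) (Lam s M')
| S_app1 M M' N : tstep M M' -> tstep (App M N) (App M' N)
| S_app2 M N N' : tstep N N' -> tstep (App M N) (App M N')
| S_Y s s' : tystep s s' -> tstep (Yc s) (Yc s')
| S_op1 o a a' b : tstep a a' -> tstep (Op o a b) (Op o a' b)
| S_op2 o a b b' : tstep b b' -> tstep (Op o a b) (Op o a b')
with tystep {G : Type} : ty G -> ty G -> Prop :=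
| S_circ E E' : tstep E E' -> tystep (TCirc E) (TCirc E')
| S_pi1 a a' b : tystep a a' -> tystep (TPi a b) (TPi a' b)
| S_pi2 a b b' x : ~ In x (fv_ty b) -> ~ In x (fv_ty b') ->
    tystep (open_ty 0 (FVar x) b) (open_ty 0 (FVar x) b') -> tystep (TPi a b) (TPi a b').

Definition tyeq {G : Type} : ty G -> ty G -> Prop := clos_refl_sym_trans (ty G) tystep.

(* Typing.  Bases are lists of (name, type) with distinct names; the   *)
(* rules are invariant under permutation of the list (set semantics).  *)
(* Derivations are data (Type-valued) so that one can speak of the     *)
(* types occurring in a derivation.  ar g = k  iff  g is in U(k).      *)

Definition base (G : Type) := list (nat * ty G).

Inductive yshape {G : Type} : ty G -> Prop :=
| YS_nat : yshape TNat
| YS_circ E : yshape (TCirc E)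
| YS_arr a b : lc_ty 0 b -> yshape b -> yshape (TPi a b).

Inductive const_ty {G : Type} (ar : G -> nat) : term G -> ty G -> Prop :=
| C_succ : const_ty ar Succ (Arr TNat TNat)
| C_pred : const_ty ar Pred (Arr TNat TNat)
| C_if : const_ty ar If (Arr TNat (Arr TNat (Arr TNat TNat)))
| C_get : const_ty ar GetB (Arr TNat (Arr TNat TNat))
| C_set : const_ty ar SetB (Arr TNat (Arr TNat TNat))
| C_num n : const_ty ar (Num n) TIdx
| C_gate g : const_ty ar (Gate g) (TCirc (Num (ar g))).

Inductive typing {G : Type} (ar : G -> nat) : base G -> term G -> ty G -> Type :=
| T_var B B' x s :
    NoDup (map fst ((x, s) :: B)) -> Permutation B' ((x, s) :: B) ->
    (forall p, In p B -> wft ar B (snd p)) -> wft ar B s ->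
    typing ar B' (FVar x) s
| T_lam B x s N t :
    ~ In x (map fst B) -> ~ In x (fv_t N) -> ~ In x (fv_ty t) ->
    typing ar ((x, s) :: B) (open_t 0 (FVar x) N) (open_ty 0 (FVar x) t) ->
    typing ar B (Lam s N) (TPi s t)
| T_app B P Q s t :
    typing ar B P (TPi s t) -> typing ar B Q s -> typing ar B (App P Q) (open_ty 0 Q t)
| T_const B c s :
    NoDup (map fst B) -> (forall p, In p B -> wft ar B (snd p)) -> const_ty ar c s ->
    typing ar B c s
| T_ifc B E : typing ar B E TIdx ->
    typing ar B If (Arr TNat (Arr (TCirc E) (Arr (TCirc E) (TCirc E))))
| T_Y B s :
    NoDup (map fst B) -> (forall p, In p B -> wft ar B (snd p)) -> wft ar B s ->
    yshape s -> typing ar B (Yc s) (Arr (Arr s s) s)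
| T_idxnat B M : typing ar B M TIdx -> typing ar B M TNat
| T_op B o E0 E1 : typing ar B E0 TIdx -> typing ar B E1 TIdx -> typing ar B (Op o E0 E1) TIdx
| T_size B M E : typing ar B M (TCirc E) -> typing ar B (App Size M) TIdx
| T_seq B E : typing ar B E TIdx ->
    typing ar B Seq (Arr (TCirc E) (Arr (TCirc E) (TCirc E)))
| T_par B E0 E1 : typing ar B E0 TIdx -> typing ar B E1 TIdx ->
    typing ar B Par (Arr (TCirc E0) (Arr (TCirc E1)
                       (TCirc (Op OPlus (Op OPlus E0 E1) (Num 1)))))
| T_rev B E : typing ar B E TIdx -> typing ar B Reverse (Arr (TCirc E) (TCirc E))
| T_iter B E0 E1 : typing ar B E0 TIdx -> typing ar B E1 TIdx ->
    typing ar B Iter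
      (TPi TIdx (TPi (TCirc E0) (TPi (TCirc E1)
         (TCirc (Op OPlus E0 (Op OTimes (Op OPlus (Num 1) E1) (BVar 2)))))))
| T_dmeas B E : typing ar B E TIdx -> typing ar B DMeas (Arr TNat (Arr (TCirc E) TNat))
| T_conv B M s t : typing ar B M s -> tyeq s t -> typing ar B M t
(* wft B s : all typings in sC(B, s) are derivable *)
with wft {G : Type} (ar : G -> nat) : base G -> ty G -> Type :=
| W_nat B : wft ar B TNat
| W_idx B : wft ar B TIdx
| W_circ B E : typing ar B E TIdx -> wft ar B (TCirc E)
| W_pi B x s t : ~ In x (map fst B) -> ~ In x (fv_ty t) ->
    wft ar B s -> wft ar ((x, s) :: B) (open_ty 0 (FVar x) t) -> wft ar B (TPi s t).

Fixpoint occ_t {G : Type} (r : ty G) (t : term G) : Prop :=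
  match t with
  | Lam s M => occ_ty r s \/ occ_t r M
  | App M N => occ_t r M \/ occ_t r N
  | Yc s => occ_ty r s
  | Op _ a b => occ_t r a \/ occ_t r b
  | _ => False
  end
with occ_ty {G : Type} (r : ty G) (s : ty G) : Prop :=
  s = r \/
  match s with
  | TCirc E => occ_t r E
  | TPi a b => occ_ty r a \/ occ_ty r b
  | _ => False
  end.

Definition occ_judg {G : Type} (r : ty G) (B : base G) (M : term G) (s : ty G) : Prop :=
  (exists p, In p B /\ occ_ty r (snd p)) \/ occ_t r M \/ occ_ty r s.

Fixpoint occ_d {G : Type} {ar : G -> nat} (r : ty G) {B M s} (D : typing ar B M s)
  {struct D} : Prop :=
  occ_judg r B M s \/
  match D with
  | T_var _ B0 _ _ _ _ _ W w => (exists p (h : In p B0), occ_w r (W p h)) \/ occ_w r w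
  | T_lam _ _ _ _ _ _ _ _ _ D1 => occ_d r D1
  | T_app _ _ _ _ _ _ D1 D2 => occ_d r D1 \/ occ_d r D2
  | T_const _ B0 _ _ _ W _ => exists p (h : In p B0), occ_w r (W p h)
  | T_ifc _ _ _ D1 => occ_d r D1
  | T_Y _ B0 _ _ W w _ => (exists p (h : In p B0), occ_w r (W p h)) \/ occ_w r w
  | T_idxnat _ _ _ D1 => occ_d r D1
  | T_op _ _ _ _ _ D1 D2 => occ_d r D1 \/ occ_d r D2
  | T_size _ _ _ _ D1 => occ_d r D1
  | T_seq _ _ _ D1 => occ_d r D1
  | T_par _ _ _ _ D1 D2 => occ_d r D1 \/ occ_d r D2
  | T_rev _ _ _ D1 => occ_d r D1
  | T_iter _ _ _ _ D1 D2 => occ_d r D1 \/ occ_d r D2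
  | T_dmeas _ _ _ D1 => occ_d r D1
  | T_conv _ _ _ _ _ D1 _ => occ_d r D1
  end
with occ_w {G : Type} {ar : G -> nat} (r : ty G) {B s} (W : wft ar B s)
  {struct W} : Prop :=
  (exists p, In p B /\ occ_ty r (snd p)) \/ occ_ty r s \/
  match W with
  | W_nat _ _ => False
  | W_idx _ _ => False
  | W_circ _ _ _ D1 => occ_d r D1
  | W_pi _ _ _ _ _ _ _ W1 W2 => occ_w r W1 \/ occ_w r W2
  end.

Fixpoint apps {G : Type} (M : term G) (Ps : list (term G)) : term G :=
  match Ps with
  | [] => M
  | P :: Ps' => apps (App M P) Ps'
  end.

Fixpoint revc {G : Type} (dag : G -> G) (C : term G) : term G :=
  match C with
  | Gate g => Gate (dag g)
  | App (App Seq C1) C2 => App (App Seq (revc dag C2)) (revc dag C1)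
  | App (App Par C1) C2 => App (App Par (revc dag C1)) (revc dag C2)
  | C => C
  end.

Fixpoint itpar {G : Type} (n : nat) (C1 C0 : term G) : term G :=
  match n with
  | 0 => C0
  | S n' => App (App Par C1) (itpar n' C1 C0)
  end.

(* mprob k C m n : probability of obtaining outcome n when measuring the
   circuit C (on k+1 qubits) run on input m.  Kept abstract (it depends on
   the unspecified unitary semantics of the gates). *)
Inductive eval {G : Type} (ar : G -> nat) (dag : G -> G)
    (mprob : nat -> term G -> nat -> nat -> R) : term G -> R -> term G -> Prop :=
| E_num n : eval ar dag mprob (Num n) 1%R (Num n)
| E_succ M a n : eval ar dag mprob M a (Num n) ->
    eval ar dag mprob (App Succ M) a (Num (S n))
| E_pred M a n : eval ar dag mprob M a (Num n) ->
    eval ar dag mprob (App Pred M) a (Num (Nat.pred n))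
| E_beta s M N Ps a V : eval ar dag mprob (apps (open_t 0 N M) Ps) a V ->
    eval ar dag mprob (apps (App (Lam s M) N) Ps) a V
| E_if0 M L Rt a b V : eval ar dag mprob M a (Num 0) -> eval ar dag mprob L b V ->
    eval ar dag mprob (App (App (App If M) L) Rt) (a * b)%R V
| E_ifS M L Rt a b n V : eval ar dag mprob M a (Num (S n)) -> eval ar dag mprob Rt b V ->
    eval ar dag mprob (App (App (App If M) L) Rt) (a * b)%R V
| E_Y s M Ps a V : eval ar dag mprob (apps (App M (App (Yc s) M)) Ps) a V ->
    eval ar dag mprob (apps (App (Yc s) M) Ps) a V
| E_size M E a n : inhabited (typing ar [] M (TCirc E)) -> eval ar dag mprob E a (Num n) ->
    eval ar dag mprob (App Size M) a (Num n)
| E_op o E0 E1 a b m n : eval ar dag mprob E0 a (Num m) -> eval ar dag mprob E1 b (Num n) ->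
    eval ar dag mprob (Op o E0 E1) (a * b)%R (Num (opfun o m n))
| E_get M N a b m n : eval ar dag mprob M a (Num m) -> eval ar dag mprob N b (Num n) ->
    eval ar dag mprob (App (App GetB M) N) (a * b)%R (Num (Nat.b2n (Nat.testbit m n)))
| E_set M N a b m n : eval ar dag mprob M a (Num m) -> eval ar dag mprob N b (Num n) ->
    eval ar dag mprob (App (App SetB M) N) (a * b)%R (Num (Nat.setbit m n))
| E_gate g : eval ar dag mprob (Gate g) 1%R (Gate g)
| E_seq M N a b C C' : eval ar dag mprob M a C -> eval ar dag mprob N b C' ->
    eval ar dag mprob (App (App Seq M) N) (a * b)%R (App (App Seq C) C')
| E_par M N a b C C' : eval ar dag mprob M a C -> eval ar dag mprob N b C' ->
    eval ar dag mprob (App (App Par M) N) (a * b)%R (App (App Par C) C')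
| E_rev M a C : eval ar dag mprob M a C ->
    eval ar dag mprob (App Reverse M) a (revc dag C)
| E_iter E M0 M1 a b c n C0 C1 :
    eval ar dag mprob E a (Num n) -> eval ar dag mprob M0 b C0 -> eval ar dag mprob M1 c C1 ->
    eval ar dag mprob (App (App (App Iter E) M0) M1) (a * b * c)%R (itpar n C1 C0)
| E_dmeas M N a b m k C n :
    eval ar dag mprob M a (Num m) -> eval ar dag mprob N b C ->
    inhabited (typing ar [] N (TCirc (Num k))) ->
    (0 < mprob k C m n <= 1)%R ->
    eval ar dag mprob (App (App DMeas M) N) (a * b * mprob k C m n)%R (Num n).

(** Tait-style reducibility.  A closed term is reducible at [Idx] if it evaluates to a numeral,
    at [Nat] if it is well typed, at [Circ E] if [E] is convertible to an index that evaluates,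
    and at a [Pi] type if it sends reducible arguments to reducible results.  The fundamental
    lemma says that every typed term becomes reducible under a reducible closing substitution;
    at [Idx] and the empty base this is normalization of [E].  Neither [Y] nor [size] needs the
    circuit terms themselves to terminate: [Y] only lives at types [τ1 -> ... -> Nat] or
    [τ1 -> ... -> Circ E], where reducibility asks nothing beyond typing except that the index
    [E] evaluates, which holds because [E] is typed in the well-formedness proof of the type;
    and [size M] is evaluated through the index of the type of [M].

    On the typing side, the bases of variable and constant rules must be well formed in
    themselves, and a circuit type there would need a well-formedness proof inside its own
    proof; so such bases are circuit free, which makes weakening by closed hypotheses and
    substitution of closed terms go through. *)

From Stdlib Require Import List Lia Permutation Relations Bool Reals.
Import ListNotations.

Scheme term_ind2 := Induction for term Sort Prop
  with ty_ind2 := Induction for ty Sort Prop.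
Combined Scheme term_ty_ind from term_ind2, ty_ind2.

Scheme tstep_ind2 := Induction for tstep Sort Prop
  with tystep_ind2 := Induction for tystep Sort Prop.
Combined Scheme tstep_tystep_ind from tstep_ind2, tystep_ind2.

Scheme typing_ind2 := Induction for typing Sort Prop
  with wft_ind2 := Induction for wft Sort Prop.
Combined Scheme typing_wft_ind from typing_ind2, wft_ind2.

Ltac split_in_app := repeat match goal with
  | H : In _ (_ ++ _) |- _ => apply in_app_or in H; destruct H
  end.

Ltac destruct_ands := repeat match goal with H : _ /\ _ |- _ => destruct H end.

(** * Substitution for free names *)

Section Substitution.
Context {G : Type}.

Fixpoint subst_t (f : nat -> term G) (t : term G) : term G :=
  match t with
  | FVar x => f x
  | Lam s M => Lam (subst_ty f s) (subst_t f M)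
  | App M N => App (subst_t f M) (subst_t f N)
  | Yc s => Yc (subst_ty f s)
  | Op o a b => Op o (subst_t f a) (subst_t f b)
  | t => t
  end
with subst_ty (f : nat -> term G) (s : ty G) : ty G :=
  match s with
  | TCirc E => TCirc (subst_t f E)
  | TPi a b => TPi (subst_ty f a) (subst_ty f b)
  | s => s
  end.

Definition lc_map (f : nat -> term G) : Prop := forall n, lc_t 0 (f n).

Lemma lc_mono :
  (forall (t : term G) j, lc_t j t -> forall k, j <= k -> lc_t k t) /\
  (forall (s : ty G) j, lc_ty j s -> forall k, j <= k -> lc_ty k s).
Proof.
  apply term_ty_ind; simpl; intros; destruct_ands; try split; eauto; try lia.
  all: eapply H0; eauto; lia.
Qed.

Lemma open_lc :
  (forall (t : term G) j, lc_t j t -> forall k u, j <= k -> open_t k u t = t) /\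
  (forall (s : ty G) j, lc_ty j s -> forall k u, j <= k -> open_ty k u s = s).
Proof.
  apply term_ty_ind; simpl; intros; destruct_ands; try (f_equal; eauto; fail).
  - destruct (Nat.eqb_spec n k); auto; lia.
  - f_equal; [eapply H | eapply H0]; eauto; lia.
  - f_equal; [eapply H | eapply H0]; eauto; lia.
Qed.

Lemma open_t_lc0 (t u : term G) k : lc_t 0 t -> open_t k u t = t.
Proof. intros; eapply (proj1 open_lc); eauto; lia. Qed.

Lemma open_ty_lc0 (s : ty G) u k : lc_ty 0 s -> open_ty k u s = s.
Proof. intros; eapply (proj2 open_lc); eauto; lia. Qed.

Lemma lc_open_inv :
  (forall (t : term G) k u, lc_t k (open_t k u t) -> lc_t (S k) t) /\
  (forall (s : ty G) k u, lc_ty k (open_ty k u s) -> lc_ty (S k) s).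
Proof.
  apply term_ty_ind; simpl; intros; destruct_ands; try split; eauto; try tauto.
  destruct (Nat.eqb_spec n k); subst; simpl in *; lia.
Qed.

Lemma subst_open (f : nat -> term G) : lc_map f ->
  (forall (t : term G) k u, subst_t f (open_t k u t) = open_t k (subst_t f u) (subst_t f t)) /\
  (forall (s : ty G) k u, subst_ty f (open_ty k u s) = open_ty k (subst_t f u) (subst_ty f s)).
Proof.
  intro Hf; apply term_ty_ind; simpl; intros; auto; try (f_equal; auto; fail).
  - destruct (Nat.eqb n k); auto.
  - rewrite open_t_lc0; auto.
Qed.

Lemma subst_open_t f (t : term G) k u :
  lc_map f -> subst_t f (open_t k u t) = open_t k (subst_t f u) (subst_t f t).
Proof. intro Hf; apply (proj1 (subst_open f Hf)). Qed.

Lemma subst_open_ty f (s : ty G) k u :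
  lc_map f -> subst_ty f (open_ty k u s) = open_ty k (subst_t f u) (subst_ty f s).
Proof. intro Hf; apply (proj2 (subst_open f Hf)). Qed.

Lemma subst_ext :
  (forall (t : term G) f g, (forall n, In n (fv_t t) -> f n = g n) -> subst_t f t = subst_t g t) /\
  (forall (s : ty G) f g, (forall n, In n (fv_ty s) -> f n = g n) -> subst_ty f s = subst_ty g s).
Proof.
  apply term_ty_ind; simpl; intros; auto;
    f_equal; solve [apply H; auto | apply H; intros; apply H1; apply in_or_app; auto
                   | apply H0; intros; apply H1; apply in_or_app; auto].
Qed.

Lemma subst_FVar :
  (forall t : term G, subst_t FVar t = t) /\ (forall s : ty G, subst_ty FVar s = s).
Proof. apply term_ty_ind; simpl; intros; auto; f_equal; auto. Qed.

Lemma subst_t_id f (t : term G) : (forall n, In n (fv_t t) -> f n = FVar n) -> subst_t f t = t.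
Proof. intros H; rewrite ((proj1 subst_ext) t f FVar H); apply subst_FVar. Qed.

Lemma subst_ty_id f (s : ty G) : (forall n, In n (fv_ty s) -> f n = FVar n) -> subst_ty f s = s.
Proof. intros H; rewrite ((proj2 subst_ext) s f FVar H); apply subst_FVar. Qed.

Lemma fv_subst :
  (forall (t : term G) f n, In n (fv_t (subst_t f t)) ->
     exists m, In m (fv_t t) /\ In n (fv_t (f m))) /\
  (forall (s : ty G) f n, In n (fv_ty (subst_ty f s)) ->
     exists m, In m (fv_ty s) /\ In n (fv_t (f m))).
Proof.
  apply term_ty_ind; simpl; intros; try tauto; eauto;
    split_in_app; solve [destruct (H _ _ H1) as [m []]; exists m; split; auto using in_or_app
                        | destruct (H0 _ _ H1) as [m []]; exists m; split; auto using in_or_app].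
Qed.

Lemma in_fv_subst :
  (forall (t : term G) f m n, In m (fv_t t) -> In n (fv_t (f m)) -> In n (fv_t (subst_t f t))) /\
  (forall (s : ty G) f m n, In m (fv_ty s) -> In n (fv_t (f m)) -> In n (fv_ty (subst_ty f s))).
Proof.
  apply term_ty_ind; simpl; intros; try tauto; split_in_app; eauto using in_or_app.
  destruct H; subst; tauto.
Qed.

Lemma lc_subst f : lc_map f ->
  (forall (t : term G) k, lc_t k t -> lc_t k (subst_t f t)) /\
  (forall (s : ty G) k, lc_ty k s -> lc_ty k (subst_ty f s)).
Proof.
  intro Hf; apply term_ty_ind; simpl; intros; destruct_ands; try split; auto.
  eapply (proj1 lc_mono); [apply Hf | lia].
Qed.

Lemma fv_open :
  (forall (t : term G) k u n, In n (fv_t (open_t k u t)) -> In n (fv_t t) \/ In n (fv_t u)) /\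
  (forall (s : ty G) k u n, In n (fv_ty (open_ty k u s)) -> In n (fv_ty s) \/ In n (fv_t u)).
Proof.
  apply term_ty_ind; simpl; intros; auto; split_in_app;
  repeat match goal with
   | IH : forall k u n, In n (fv_t (open_t k u ?x)) -> _ , H : In _ (fv_t (open_t _ _ ?x)) |- _ =>
       destruct (IH _ _ _ H); clear H
   | IH : forall k u n, In n (fv_ty (open_ty k u ?x)) -> _ , H : In _ (fv_ty (open_ty _ _ ?x)) |- _ =>
       destruct (IH _ _ _ H); clear H
   end; auto using in_or_app.
  destruct (Nat.eqb n k); simpl in *; auto.
Qed.

Definition fresh (l : list nat) : nat := S (fold_right Nat.max 0 l).

Lemma fresh_notin l : ~ In (fresh l) l.
Proof.
  assert (Hmax : forall n, In n l -> n <= fold_right Nat.max 0 l).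
  { induction l as [|a l IH]; simpl; intros n Hn; [tauto|].
    destruct Hn as [->|Hn]; [lia|]. specialize (IH n Hn); lia. }
  unfold fresh; intro H; apply Hmax in H; lia.
Qed.

Definition upd (f : nat -> term G) (x : nat) (u : term G) : nat -> term G :=
  fun n => if Nat.eqb n x then u else f n.

Lemma upd_eq f x u : upd f x u x = u.
Proof. unfold upd; rewrite Nat.eqb_refl; auto. Qed.

Lemma lc_map_upd f x u : lc_map f -> lc_t 0 u -> lc_map (upd f x u).
Proof. unfold lc_map, upd; intros; destruct (Nat.eqb n x); auto. Qed.

Lemma subst_t_upd_fresh f x u (t : term G) :
  ~ In x (fv_t t) -> subst_t (upd f x u) t = subst_t f t.
Proof.
  intros; apply (proj1 subst_ext); intros; unfold upd.
  destruct (Nat.eqb_spec n x); subst; tauto.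
Qed.

Lemma subst_ty_upd_fresh f x u (s : ty G) :
  ~ In x (fv_ty s) -> subst_ty (upd f x u) s = subst_ty f s.
Proof.
  intros; apply (proj2 subst_ext); intros; unfold upd.
  destruct (Nat.eqb_spec n x); subst; tauto.
Qed.

Lemma subst_t_open_upd f x u (t : term G) : lc_map f -> lc_t 0 u -> ~ In x (fv_t t) ->
  subst_t (upd f x u) (open_t 0 (FVar x) t) = open_t 0 u (subst_t f t).
Proof.
  intros Hf Hu Hx; rewrite subst_open_t by (apply lc_map_upd; auto).
  rewrite (subst_t_upd_fresh f x u t) by auto; simpl; rewrite upd_eq; auto.
Qed.

Lemma subst_ty_open_upd f x u (s : ty G) : lc_map f -> lc_t 0 u -> ~ In x (fv_ty s) ->
  subst_ty (upd f x u) (open_ty 0 (FVar x) s) = open_ty 0 u (subst_ty f s).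
Proof.
  intros Hf Hu Hx; rewrite subst_open_ty by (apply lc_map_upd; auto).
  rewrite (subst_ty_upd_fresh f x u s) by auto; simpl; rewrite upd_eq; auto.
Qed.

Lemma step_subst :
  (forall M M' : term G, tstep M M' -> forall f, lc_map f -> tstep (subst_t f M) (subst_t f M')) /\
  (forall s s' : ty G, tystep s s' -> forall f, lc_map f -> tystep (subst_ty f s) (subst_ty f s')).
Proof.
  apply tstep_tystep_ind; intros; simpl.
  - rewrite subst_open_t; auto; constructor.
  - constructor; destruct r; simpl; constructor.
  - apply S_lam1; auto.
  - pose (l := fv_t (subst_t f M) ++ fv_t (subst_t f M')).
    apply S_lam2 with (x := fresh l); try (intro; apply (fresh_notin l); apply in_or_app; auto).
    specialize (H (upd f x (FVar (fresh l))) (lc_map_upd f x (FVar (fresh l)) H0 I)).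
    rewrite !subst_t_open_upd in H by (simpl; auto); exact H.
  - apply S_app1; auto.
  - apply S_app2; auto.
  - apply S_Y; auto.
  - apply S_op1; auto.
  - apply S_op2; auto.
  - apply S_circ; auto.
  - apply S_pi1; auto.
  - pose (l := fv_ty (subst_ty f b) ++ fv_ty (subst_ty f b')).
    apply S_pi2 with (x := fresh l); try (intro; apply (fresh_notin l); apply in_or_app; auto).
    specialize (H (upd f x (FVar (fresh l))) (lc_map_upd f x (FVar (fresh l)) H0 I)).
    rewrite !subst_ty_open_upd in H by (simpl; auto); exact H.
Qed.

Lemma tyeq_subst f (s t : ty G) : lc_map f -> tyeq s t -> tyeq (subst_ty f s) (subst_ty f t).
Proof.
  intros Hf H; induction H.
  - apply rst_step; apply (proj2 step_subst); auto.
  - apply rst_refl.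
  - apply rst_sym; auto.
  - eapply rst_trans; eauto.
Qed.

End Substitution.

(** * Circuit-free types and well-formed bases *)

Section Bases.
Context {G : Type}.

Fixpoint fv_erased (t : term G) : list nat :=
  match t with
  | FVar x => [x]
  | Lam _ M => fv_erased M
  | App M N => fv_erased M ++ fv_erased N
  | Op _ a b => fv_erased a ++ fv_erased b
  | _ => []
  end.

Lemma fv_erased_fv (t : term G) n : In n (fv_erased t) -> In n (fv_t t).
Proof. induction t; simpl; intros; auto; split_in_app; auto using in_or_app; tauto. Qed.

Lemma fv_erased_open (t : term G) k u n :
  In n (fv_erased (open_t k u t)) -> In n (fv_erased t) \/ In n (fv_erased u).
Proof.
  revert k; induction t; simpl; intros; auto; try tauto; split_in_app;
  repeat match goal with
   | IH : forall k, In n (fv_erased (open_t k u ?x)) -> _ , H : In n (fv_erased (open_t _ _ ?x)) |- _ =>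
       destruct (IH _ H); clear H
   end; auto using in_or_app; eauto.
  destruct (Nat.eqb n0 k); simpl in *; tauto.
Qed.

Lemma in_fv_erased_open (t : term G) k u n :
  In n (fv_erased t) -> In n (fv_erased (open_t k u t)).
Proof. revert k; induction t; simpl; intros; auto; try tauto; split_in_app; apply in_or_app; eauto. Qed.

Fixpoint circuit_free (s : ty G) : bool :=
  match s with
  | TNat | TIdx => true
  | TCirc _ => false
  | TPi a b => circuit_free a && circuit_free b
  end.

Lemma circuit_free_open (s : ty G) k u : circuit_free (open_ty k u s) = circuit_free s.
Proof. revert k; induction s; simpl; intros; auto; rewrite IHs1, IHs2; auto. Qed.

Lemma circuit_free_subst (s : ty G) f : circuit_free (subst_ty f s) = circuit_free s.
Proof. induction s; simpl; auto; rewrite IHs1, IHs2; auto. Qed.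

Lemma open_circuit_free (s : ty G) k u : circuit_free s = true -> open_ty k u s = s.
Proof.
  revert k; induction s; simpl; intros; auto; try discriminate.
  apply andb_prop in H as []; rewrite IHs1, IHs2; auto.
Qed.

Lemma fv_circuit_free (s : ty G) : circuit_free s = true -> fv_ty s = [].
Proof.
  induction s; simpl; intros; auto; try discriminate.
  apply andb_prop in H as []; rewrite IHs1, IHs2; auto.
Qed.

Definition is_pi (s : ty G) : bool := match s with TPi _ _ => true | _ => false end.

Fixpoint has_ground_arg (s : ty G) : Prop :=
  match s with
  | TPi a b => is_pi a = false \/ has_ground_arg b
  | _ => False
  end.

Lemma has_ground_arg_open (s : ty G) k u : has_ground_arg (open_ty k u s) <-> has_ground_arg s.
Proof. revert k; induction s; simpl; intros; try tauto; rewrite IHs2; destruct s1; simpl; tauto. Qed.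

Fixpoint tsize (s : ty G) : nat :=
  match s with
  | TPi a b => S (tsize a + tsize b)
  | _ => 1
  end.

Lemma tsize_open (s : ty G) k u : tsize (open_ty k u s) = tsize s.
Proof. revert k; induction s; simpl; intros; auto. Qed.

Lemma tsize_pos (s : ty G) : 1 <= tsize s.
Proof. destruct s; simpl; lia. Qed.

Definition same_shape (s s' : ty G) : Prop :=
  tsize s = tsize s' /\ is_pi s = is_pi s' /\ (has_ground_arg s <-> has_ground_arg s').

Lemma tystep_same_shape :
  (forall M M' : term G, tstep M M' -> True) /\
  (forall s s' : ty G, tystep s s' -> same_shape s s').
Proof.
  unfold same_shape; apply tstep_tystep_ind; intros; simpl; auto; try tauto.
  - destruct H as [? [Hpi _]]; rewrite Hpi; repeat split; try lia; tauto.
  - destruct H as [? [_ H]]; rewrite !tsize_open, !has_ground_arg_open in *.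
    repeat split; try lia; tauto.
Qed.

Lemma tyeq_same_shape (s s' : ty G) : tyeq s s' -> same_shape s s'.
Proof.
  unfold same_shape; intro H; induction H.
  - apply (proj2 tystep_same_shape); auto.
  - repeat split; tauto.
  - destruct IHclos_refl_sym_trans as [? []]; repeat split; auto; tauto.
  - destruct IHclos_refl_sym_trans1 as [? []], IHclos_refl_sym_trans2 as [? []].
    repeat split; try congruence; tauto.
Qed.

Inductive component (s0 : ty G) : ty G -> nat -> Prop :=
| Comp_refl c : component s0 s0 c
| Comp_dom a b c : component s0 a c -> component s0 (TPi a b) c
| Comp_cod a b c x : x <> c -> component s0 (open_ty 0 (FVar x) b) c -> component s0 (TPi a b) c.

Lemma component_trans s0 s1 s c : component s0 s1 c -> component s1 s c -> component s0 s c.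
Proof. intros H1 H2; induction H2; auto; [apply Comp_dom | eapply Comp_cod]; eauto. Qed.

Lemma component_circuit_free s0 s c :
  component s0 s c -> circuit_free s0 = false -> circuit_free s = false.
Proof.
  intro H; induction H; intros; simpl; auto.
  - rewrite IHcomponent; auto.
  - rewrite circuit_free_open in IHcomponent; rewrite IHcomponent; auto; apply andb_false_r.
Qed.

Fixpoint index_fv (c : nat) (s : ty G) : Prop :=
  match s with
  | TCirc E => In c (fv_erased E)
  | TPi a b => index_fv c a \/ index_fv c b
  | _ => False
  end.

Lemma index_fv_open c s k u : index_fv c s -> index_fv c (open_ty k u s).
Proof. revert k; induction s; simpl; intros; auto; [apply in_fv_erased_open | destruct H]; auto. Qed.

Lemma index_fv_open_inv c s k x : index_fv c (open_ty k (FVar x) s) -> x <> c -> index_fv c s.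
Proof.
  revert k; induction s; simpl; intros; auto.
  - apply fv_erased_open in H; simpl in H; destruct H as [|[|[]]]; subst; tauto.
  - destruct H; eauto.
Qed.

Lemma index_fv_fv c s : index_fv c s -> In c (fv_ty s).
Proof. induction s; simpl; intros; auto using fv_erased_fv; destruct H; apply in_or_app; auto. Qed.

Lemma index_fv_component s0 s c : component s0 s c -> index_fv c s0 -> index_fv c s.
Proof. intro H; induction H; intros; simpl; eauto using index_fv_open_inv. Qed.

Lemma in_map_fst {A B : Type} (a : A) (b : B) l : In (a, b) l -> In a (map fst l).
Proof. intro H; apply (in_map fst) in H; auto. Qed.

Variable ar : G -> nat.

Lemma fv_erased_typing_wft :
  (forall B M t (D : typing ar B M t), forall c, In c (fv_erased M) -> In c (map fst B)) /\
  (forall B s (W : wft ar B s), forall c, index_fv c s -> In c (map fst B)).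
Proof.
  apply typing_wft_ind;
    intros; simpl in *; auto; try tauto; split_in_app; auto.
  - destruct H1 as [<-|[]].
    eapply Permutation_in; [apply Permutation_map, Permutation_sym; eauto | left; auto].
  - destruct (H c (in_fv_erased_open _ _ _ _ H0)) as [->|]; auto.
    exfalso; apply n0, fv_erased_fv; auto.
  - destruct c0; simpl in *; tauto.
  - destruct H1 as [Hs|Ht]; auto.
    destruct (H0 _ (index_fv_open _ _ 0 (FVar x) Ht)) as [->|]; auto.
    exfalso; apply n0, index_fv_fv; auto.
Qed.

(** The base of a variable or constant rule must be well formed in itself. A circuit type
    [Circ E] in such a base needs a typing of [E] in the same base, hence again a
    well-formedness proof of the base: a finite derivation cannot close this cycle. *)
Lemma circuit_type_in_base :
  (forall B M t (D : typing ar B M t), forall c s, In (c, s) B -> circuit_free s = false ->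
      has_ground_arg t \/
      (In c (fv_erased M) /\ exists L, ~ In c (map fst L) /\ inhabited (wft ar L s))) /\
  (forall B s0 (W : wft ar B s0), forall c s, In (c, s) B -> circuit_free s0 = false ->
      component s0 s c -> False).
Proof.
  apply typing_wft_ind;
  intros; simpl in *; try (left; left; reflexivity).
  - apply (Permutation_in _ p) in H1 as [Heq|Hin].
    + injection Heq as <- <-; right; split; auto.
      exists B; split; [inversion n; auto | constructor; auto].
    + exfalso; eapply (H (c, s0) Hin); simpl; eauto; constructor.
  - assert (Hx : c <> x) by (intro; subst; apply n; eapply in_map_fst; eauto).
    destruct (H c s0 (or_intror H0) H1) as [Hn | [Hf HL]].
    + left; right; apply has_ground_arg_open in Hn; auto.
    + right; split; auto.
      apply fv_erased_open in Hf; simpl in Hf; destruct Hf as [|[|[]]]; subst; tauto.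
  - destruct (H c s0 H1 H2) as [[Hn|Hn] | [Hf HL]].
    + destruct (H0 c s0 H1 H2) as [Hn'|[Hf HL]].
      * destruct s; simpl in *; try discriminate; tauto.
      * right; split; auto; apply in_or_app; auto.
    + left; apply has_ground_arg_open; auto.
    + right; split; auto; apply in_or_app; auto.
  - exfalso; eapply (H (c1, s0) H0); simpl; eauto; constructor.
  - exfalso; eapply (H (c, s0) H1); simpl; eauto; constructor.
  - destruct (H c s H0 H1) as [[]|]; auto.
  - destruct (H c s H1 H2) as [[]|[Hf HL]]; right; split; auto; apply in_or_app; auto.
  - destruct (H c s H0 H1) as [[]|[Hf HL]]; right; split; auto.
  - destruct (H c s0 H0 H1) as [Hn|]; auto.
    left; apply (tyeq_same_shape _ _ t1); auto.
  - discriminate.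
  - discriminate.
  - assert (Hs : circuit_free s = false) by (eapply component_circuit_free; eauto).
    destruct (H c s H0 Hs) as [[]|[Hf [L [HL [W]]]]].
    apply HL, ((proj2 fv_erased_typing_wft) _ _ W); eapply index_fv_component; eauto.
  - apply andb_false_iff in H2 as [H2|H2].
    + eapply H; eauto; eapply component_trans; [|eauto]; apply Comp_dom; constructor.
    + eapply H0; [right; eauto | rewrite circuit_free_open; auto |].
      eapply component_trans; [|eauto]; eapply Comp_cod; [|constructor].
      intro; subst; apply n; eapply in_map_fst; eauto.
Qed.

Lemma wf_base_circuit_free B : (forall p, In p B -> wft ar B (snd p)) ->
  forall p, In p B -> circuit_free (snd p) = true.
Proof.
  intros W [c s] Hp; destruct (circuit_free s) eqn:E; auto; exfalso.
  eapply (proj2 circuit_type_in_base _ _ (W _ Hp) c s Hp E); constructor.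
Qed.

Lemma wft_circuit_free (s : ty G) : circuit_free s = true -> forall B, wft ar B s.
Proof.
  induction s; simpl; intros; try discriminate; try constructor.
  apply andb_prop in H as [].
  apply W_pi with (x := fresh (map fst B)); auto using fresh_notin.
  - rewrite fv_circuit_free; auto.
  - rewrite open_circuit_free; auto.
Qed.

Lemma typing_wft_lc :
  (forall B M t (D : typing ar B M t), lc_t 0 M /\ forall p, In p B -> lc_ty 0 (snd p)) /\
  (forall B s (W : wft ar B s), lc_ty 0 s).
Proof.
  apply typing_wft_ind;
  intros; simpl in *; destruct_ands; try split; auto.
  - intros q Hq; apply (Permutation_in _ p) in Hq as [<-|]; simpl; auto.
  - split; [apply (H0 (x, s)); left; auto | eapply (proj1 lc_open_inv); eauto].
  - destruct c0; simpl; auto.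
  - eapply (proj2 lc_open_inv); eauto.
Qed.

Lemma typing_lc B M t (D : typing ar B M t) : lc_t 0 M.
Proof. apply (proj1 typing_wft_lc B M t D). Qed.

End Bases.

(** * Renaming, weakening and substitution *)

Section Renaming.
Context {G : Type}.
Variable ar : G -> nat.

Fixpoint binders {B M t} (D : typing ar B M t) {struct D} : list nat :=
  match D with
  | T_var _ _ _ _ _ _ _ _ w => binders_wft w
  | T_lam _ _ x _ _ _ _ _ _ D1 => x :: binders D1
  | T_app _ _ _ _ _ _ D1 D2 => binders D1 ++ binders D2
  | T_const _ _ _ _ _ _ _ => []
  | T_ifc _ _ _ D1 => binders D1
  | T_Y _ _ _ _ _ w _ => binders_wft w
  | T_idxnat _ _ _ D1 => binders D1
  | T_op _ _ _ _ _ D1 D2 => binders D1 ++ binders D2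
  | T_size _ _ _ _ D1 => binders D1
  | T_seq _ _ _ D1 => binders D1
  | T_par _ _ _ _ D1 D2 => binders D1 ++ binders D2
  | T_rev _ _ _ D1 => binders D1
  | T_iter _ _ _ _ D1 D2 => binders D1 ++ binders D2
  | T_dmeas _ _ _ D1 => binders D1
  | T_conv _ _ _ _ _ D1 _ => binders D1
  end
with binders_wft {B s} (W : wft ar B s) {struct W} : list nat :=
  match W with
  | W_nat _ _ => []
  | W_idx _ _ => []
  | W_circ _ _ _ D1 => binders D1
  | W_pi _ _ x _ _ _ _ W1 W2 => x :: binders_wft W1 ++ binders_wft W2
  end.

Definition swap (a b n : nat) : nat :=
  if Nat.eqb n a then b else if Nat.eqb n b then a else n.

Lemma swap_involutive a b n : swap a b (swap a b n) = n.
Proof.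
  unfold swap; destruct (Nat.eqb_spec n a) as [->|Hna].
  - destruct (Nat.eqb_spec b a) as [->|]; [|rewrite Nat.eqb_refl]; auto.
  - destruct (Nat.eqb_spec n b) as [->|Hnb]; [rewrite Nat.eqb_refl; auto|].
    rewrite (proj2 (Nat.eqb_neq n a) Hna), (proj2 (Nat.eqb_neq n b) Hnb); auto.
Qed.

Lemma swap_inj a b : FinFun.Injective (swap a b).
Proof. intros n m H; rewrite <- (swap_involutive a b n), H; apply swap_involutive. Qed.

Lemma in_map_swap a b n l : In n (map (swap a b) l) <-> In (swap a b n) l.
Proof.
  rewrite in_map_iff; split.
  - intros [m [<- Hm]]; rewrite swap_involutive; auto.
  - intros H; exists (swap a b n); rewrite swap_involutive; auto.
Qed.

Definition swap_map (a b : nat) : nat -> term G := fun n => FVar (swap a b n).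

Lemma lc_map_swap a b : lc_map (swap_map a b).
Proof. intro; simpl; auto. Qed.

Lemma fv_swap_t a b (t : term G) n :
  In n (fv_t (subst_t (swap_map a b) t)) <-> In (swap a b n) (fv_t t).
Proof.
  split; intro H.
  - destruct ((proj1 fv_subst) t _ _ H) as [m [Hm [<-|[]]]]; rewrite swap_involutive; auto.
  - eapply (proj1 in_fv_subst); eauto; left; apply swap_involutive.
Qed.

Lemma fv_swap_ty a b (s : ty G) n :
  In n (fv_ty (subst_ty (swap_map a b) s)) <-> In (swap a b n) (fv_ty s).
Proof.
  split; intro H.
  - destruct ((proj2 fv_subst) s _ _ H) as [m [Hm [<-|[]]]]; rewrite swap_involutive; auto.
  - eapply (proj2 in_fv_subst); eauto; left; apply swap_involutive.
Qed.

Definition swap_base a b (B : base G) : base G :=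
  map (fun p => (swap a b (fst p), subst_ty (swap_map a b) (snd p))) B.

Lemma swap_base_fst a b B : map fst (swap_base a b B) = map (swap a b) (map fst B).
Proof. unfold swap_base; rewrite !map_map; auto. Qed.

Lemma NoDup_swap_base a b B : NoDup (map fst B) -> NoDup (map fst (swap_base a b B)).
Proof. rewrite swap_base_fst; apply FinFun.Injective_map_NoDup, swap_inj. Qed.

Lemma swap_base_circuit_free a b B :
  (forall p, In p B -> circuit_free (snd p) = true) ->
  forall p, In p (swap_base a b B) -> wft ar (swap_base a b B) (snd p).
Proof.
  intros H p Hp; apply wft_circuit_free.
  apply in_map_iff in Hp as [q [<- Hq]]; simpl; rewrite circuit_free_subst; auto.
Qed.

Lemma yshape_subst f (s : ty G) : lc_map f -> yshape s -> yshape (subst_ty f s).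
Proof. intros Hf H; induction H; simpl; constructor; auto; apply (proj2 (lc_subst f Hf)); auto. Qed.

Lemma const_ty_subst f c (s : ty G) : const_ty ar c s -> subst_t f c = c /\ subst_ty f s = s.
Proof. intro H; destruct H; simpl; auto. Qed.

Lemma typing_cast B M M' t t' (D : typing ar B M t) :
  M = M' -> t = t' -> exists D' : typing ar B M' t', binders D' = binders D.
Proof. intros; subst; exists D; auto. Qed.

Lemma wft_cast B t t' (W : wft ar B t) :
  t = t' -> exists W' : wft ar B t', binders_wft W' = binders_wft W.
Proof. intros; subst; exists W; auto. Qed.

Lemma typing_swap a b :
  (forall B M t (D : typing ar B M t),
     exists D' : typing ar (swap_base a b B) (subst_t (swap_map a b) M) (subst_ty (swap_map a b) t),
       binders D' = map (swap a b) (binders D)) /\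
  (forall B s (W : wft ar B s),
     exists W' : wft ar (swap_base a b B) (subst_ty (swap_map a b) s),
       binders_wft W' = map (swap a b) (binders_wft W)).
Proof.
  assert (Hlc := lc_map_swap a b).
  apply typing_wft_ind; simpl.
  - intros B B' x s Hnd Hperm Wb _ w [w' Hw'].
    assert (HCF := wf_base_circuit_free ar B Wb).
    unshelve eexists (T_var ar _ (swap_base a b B') (swap a b x) _ _ _ _ w');
      auto using swap_base_circuit_free.
    + apply (NoDup_swap_base a b ((x, s) :: B)); auto.
    + exact (Permutation_map _ Hperm).
  - intros B x s N t Hx HxN Hxt D [D1 HD1].
    destruct (typing_cast _ _ _ _ _ D1 (subst_open_t _ _ _ _ Hlc) (subst_open_ty _ _ _ _ Hlc))
      as [D' HD']; rewrite HD1 in HD'; simpl in D'.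
    unshelve eexists (T_lam ar _ (swap a b x) _ _ _ _ _ _ D').
    + rewrite swap_base_fst, in_map_swap, swap_involutive; auto.
    + rewrite fv_swap_t, swap_involutive; auto.
    + rewrite fv_swap_ty, swap_involutive; auto.
    + simpl; f_equal; exact HD'.
  - intros B P Q s t DP [DP' HP] DQ [DQ' HQ].
    destruct (typing_cast _ _ _ _ _ (T_app ar _ _ _ _ _ DP' DQ') eq_refl
                (eq_sym (subst_open_ty _ _ _ _ Hlc))) as [D' HD'].
    exists D'; rewrite HD'; simpl; rewrite map_app; f_equal; auto.
  - intros B c s Hnd Wb _ Hc.
    assert (HCF := wf_base_circuit_free ar B Wb).
    destruct (const_ty_subst (swap_map a b) _ _ Hc) as [-> ->].
    unshelve eexists (T_const ar _ _ _ _ _ Hc); auto using NoDup_swap_base, swap_base_circuit_free.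
  - intros B E ? [D1 HD1]; exists (T_ifc ar _ _ D1); auto.
  - intros B s Hnd Wb _ w [w' Hw'] Hy.
    assert (HCF := wf_base_circuit_free ar B Wb).
    unshelve eexists (T_Y ar _ _ _ _ w' (yshape_subst _ _ Hlc Hy));
      auto using NoDup_swap_base, swap_base_circuit_free.
  - intros B M ? [D1 HD1]; exists (T_idxnat ar _ _ D1); auto.
  - intros B o E0 E1 ? [D0 HD0] ? [D1 HD1]; exists (T_op ar _ _ _ _ D0 D1).
    simpl; rewrite map_app; f_equal; auto.
  - intros B M E ? [D1 HD1]; exists (T_size ar _ _ _ D1); auto.
  - intros B E ? [D1 HD1]; exists (T_seq ar _ _ D1); auto.
  - intros B E0 E1 ? [D0 HD0] ? [D1 HD1]; exists (T_par ar _ _ _ D0 D1).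
    simpl; rewrite map_app; f_equal; auto.
  - intros B E ? [D1 HD1]; exists (T_rev ar _ _ D1); auto.
  - intros B E0 E1 ? [D0 HD0] ? [D1 HD1]; exists (T_iter ar _ _ _ D0 D1).
    simpl; rewrite map_app; f_equal; auto.
  - intros B E ? [D1 HD1]; exists (T_dmeas ar _ _ D1); auto.
  - intros B M s t ? [D1 HD1] Heq; exists (T_conv ar _ _ _ _ D1 (tyeq_subst _ _ _ Hlc Heq)); auto.
  - intros B; exists (W_nat ar _); auto.
  - intros B; exists (W_idx ar _); auto.
  - intros B E ? [D1 HD1]; exists (W_circ ar _ _ D1); auto.
  - intros B x s t Hx Hxt ? [W1 HW1] ? [W2 HW2].
    destruct (wft_cast _ _ _ W2 (subst_open_ty _ _ _ _ Hlc)) as [W' HW']; rewrite HW2 in HW'.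
    simpl in W'.
    unshelve eexists (W_pi ar _ (swap a b x) _ _ _ _ W1 W').
    + rewrite swap_base_fst, in_map_swap, swap_involutive; auto.
    + rewrite fv_swap_ty, swap_involutive; auto.
    + simpl; rewrite map_app; f_equal; f_equal; auto.
Qed.

(** Swapping each name of [L] with a fresh one moves the bound names of a derivation away from
    [L] while fixing the closed judgement. *)
Lemma closed_typing_avoiding L : forall N T (D : typing ar [] N T),
  fv_t N = [] -> fv_ty T = [] ->
  exists D' : typing ar [] N T, forall n, In n (binders D') -> ~ In n L.
Proof.
  induction L as [|a L IHL]; intros N T D HN HT; [exists D; simpl; auto|].
  destruct (IHL N T D HN HT) as [D1 HD1].
  set (z := fresh (a :: L ++ binders D1)).
  assert (Hz := fresh_notin (a :: L ++ binders D1)); fold z in Hz.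
  destruct (proj1 (typing_swap a z) _ _ _ D1) as [D2 HD2].
  pose (D2' := D2 : typing ar [] (subst_t (swap_map a z) N) (subst_ty (swap_map a z) T)).
  assert (HD2' : binders D2' = map (swap a z) (binders D1)) by exact HD2.
  assert (EN : subst_t (swap_map a z) N = N) by (apply subst_t_id; rewrite HN; simpl; tauto).
  assert (ET : subst_ty (swap_map a z) T = T) by (apply subst_ty_id; rewrite HT; simpl; tauto).
  destruct (typing_cast _ _ _ _ _ D2' EN ET) as [D3 HD3].
  exists D3; intros n Hn; rewrite HD3, HD2' in Hn.
  apply in_map_iff in Hn as [m [<- Hm]].
  assert (Hmz : m <> z) by (intros ->; apply Hz; right; apply in_or_app; auto).
  specialize (HD1 m Hm); unfold swap.
  destruct (Nat.eqb_spec m a) as [->|]; [|destruct (Nat.eqb_spec m z); [tauto|]].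
  - intros [|Hc]; [|apply Hz; right]; auto using in_or_app.
  - intros [|]; subst; tauto.
Qed.

End Renaming.

Section Weakening.
Context {G : Type}.
Variable ar : G -> nat.

Lemma circuit_free_app_wft (B X : base G) :
  (forall p, In p B -> circuit_free (snd p) = true) ->
  (forall p, In p X -> circuit_free (snd p) = true) ->
  forall p, In p (B ++ X) -> wft ar (B ++ X) (snd p).
Proof. intros HB HX p Hp; apply wft_circuit_free; apply in_app_or in Hp as []; auto. Qed.

Lemma not_in_app_fst (x : nat) (B X : base G) :
  ~ In x (map fst B) -> ~ In x (map fst X) -> ~ In x (map fst (B ++ X)).
Proof. rewrite map_app; intros H1 H2 H; apply in_app_or in H as []; tauto. Qed.

Lemma typing_weaken_var B B' x s X :
  NoDup (map fst ((x, s) :: B)) -> Permutation B' ((x, s) :: B) ->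
  (forall p, In p B -> wft ar B (snd p)) ->
  (NoDup (map fst (B ++ X)) -> inhabited (wft ar (B ++ X) s)) ->
  (forall p, In p X -> circuit_free (snd p) = true) -> NoDup (map fst (B' ++ X)) ->
  inhabited (typing ar (B' ++ X) (FVar x) s).
Proof.
  intros Hnd Hperm Wb IHw HX HndX.
  assert (Hperm' : Permutation (B' ++ X) ((x, s) :: B ++ X))
    by (rewrite app_comm_cons; apply Permutation_app_tail; auto).
  assert (Hnd' : NoDup (map fst ((x, s) :: B ++ X)))
    by (eapply Permutation_NoDup; [apply Permutation_map; eauto | auto]).
  destruct IHw as [w']; [inversion Hnd'; auto |].
  constructor; apply (T_var ar (B ++ X) (B' ++ X) x s Hnd' Hperm'); auto.
  apply circuit_free_app_wft; auto; apply (wf_base_circuit_free ar B Wb).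
Qed.

Lemma typing_weaken :
  (forall B M t (D : typing ar B M t), forall X, (forall p, In p X -> circuit_free (snd p) = true) ->
      NoDup (map fst (B ++ X)) -> (forall n, In n (binders ar D) -> ~ In n (map fst X)) ->
      inhabited (typing ar (B ++ X) M t)) /\
  (forall B s (W : wft ar B s), forall X, (forall p, In p X -> circuit_free (snd p) = true) ->
      NoDup (map fst (B ++ X)) -> (forall n, In n (binders_wft ar W) -> ~ In n (map fst X)) ->
      inhabited (wft ar (B ++ X) s)).
Proof.
  apply typing_wft_ind; simpl.
  - intros B B' x s Hnd Hperm Wb _ w IHw X HX HndX Hbind.
    apply typing_weaken_var with B; auto.
  - intros B x s N t Hx HxN Hxt D IH X HX HndX Hbind.
    assert (HxX : ~ In x (map fst X)) by (apply Hbind; left; auto).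
    destruct (IH X HX) as [D1]; auto.
    + simpl; constructor; auto; apply not_in_app_fst; auto.
    + constructor; apply (T_lam ar (B ++ X) x s N t); auto; apply not_in_app_fst; auto.
  - intros B P Q s t DP IHP DQ IHQ X HX HndX Hbind.
    destruct (IHP X HX HndX) as [DP']; [intros; apply Hbind, in_or_app; auto |].
    destruct (IHQ X HX HndX) as [DQ']; [intros; apply Hbind, in_or_app; auto |].
    constructor; eapply T_app; eauto.
  - intros B c s Hnd Wb _ Hc X HX HndX _.
    constructor; apply T_const; auto.
    apply circuit_free_app_wft; auto; apply (wf_base_circuit_free ar B Wb).
  - intros B E D IH X HX HndX Hbind; destruct (IH X HX HndX Hbind) as [D']. constructor; apply T_ifc; auto.
  - intros B s Hnd Wb _ w IHw Hy X HX HndX Hbind; destruct (IHw X HX HndX Hbind) as [w'].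
    constructor; apply T_Y; auto.
    apply circuit_free_app_wft; auto; apply (wf_base_circuit_free ar B Wb).
  - intros B M D IH X HX HndX Hbind; destruct (IH X HX HndX Hbind) as [D']. constructor; apply T_idxnat; auto.
  - intros B o E0 E1 D0 IH0 D1 IH1 X HX HndX Hbind.
    destruct (IH0 X HX HndX) as [D0']; [intros; apply Hbind, in_or_app; auto |].
    destruct (IH1 X HX HndX) as [D1']; [intros; apply Hbind, in_or_app; auto |].
    constructor; apply T_op; auto.
  - intros B M E D IH X HX HndX Hbind; destruct (IH X HX HndX Hbind) as [D']. constructor; eapply T_size; eauto.
  - intros B E D IH X HX HndX Hbind; destruct (IH X HX HndX Hbind) as [D']. constructor; apply T_seq; auto.
  - intros B E0 E1 D0 IH0 D1 IH1 X HX HndX Hbind.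
    destruct (IH0 X HX HndX) as [D0']; [intros; apply Hbind, in_or_app; auto |].
    destruct (IH1 X HX HndX) as [D1']; [intros; apply Hbind, in_or_app; auto |].
    constructor; apply T_par; auto.
  - intros B E D IH X HX HndX Hbind; destruct (IH X HX HndX Hbind) as [D']. constructor; apply T_rev; auto.
  - intros B E0 E1 D0 IH0 D1 IH1 X HX HndX Hbind.
    destruct (IH0 X HX HndX) as [D0']; [intros; apply Hbind, in_or_app; auto |].
    destruct (IH1 X HX HndX) as [D1']; [intros; apply Hbind, in_or_app; auto |].
    constructor; apply T_iter; auto.
  - intros B E D IH X HX HndX Hbind; destruct (IH X HX HndX Hbind) as [D']. constructor; apply T_dmeas; auto.
  - intros B M s t D IH Heq X HX HndX Hbind; destruct (IH X HX HndX Hbind) as [D'].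
    constructor; eapply T_conv; eauto.
  - constructor; apply W_nat.
  - constructor; apply W_idx.
  - intros B E D IH X HX HndX Hbind; destruct (IH X HX HndX Hbind) as [D']. constructor; apply W_circ; auto.
  - intros B x s t Hx Hxt W1 IH1 W2 IH2 X HX HndX Hbind.
    assert (HxX : ~ In x (map fst X)) by (apply Hbind; left; auto).
    destruct (IH1 X HX HndX) as [W1']; [intros; apply Hbind; right; apply in_or_app; auto |].
    destruct (IH2 X HX) as [W2'].
    + simpl; constructor; auto; apply not_in_app_fst; auto.
    + intros; apply Hbind; right; apply in_or_app; auto.
    + constructor; apply (W_pi ar (B ++ X) x s t); auto; apply not_in_app_fst; auto.
Qed.

Lemma closed_typing_weaken N T (D : typing ar [] N T) (X : base G) :
  fv_t N = [] -> fv_ty T = [] -> NoDup (map fst X) ->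
  (forall p, In p X -> circuit_free (snd p) = true) -> inhabited (typing ar X N T).
Proof.
  intros HN HT Hnd HX.
  destruct (closed_typing_avoiding ar (map fst X) N T D HN HT) as [D' HD'].
  exact ((proj1 typing_weaken) [] N T D' X HX Hnd HD').
Qed.

End Weakening.

Section ClosingSubstitution.
Context {G : Type}.
Variable ar : G -> nat.

Definition notin_b (S : list nat) (n : nat) : bool :=
  if in_dec Nat.eq_dec n S then false else true.

Lemma notin_bP S n : notin_b S n = true <-> ~ In n S.
Proof. unfold notin_b; destruct (in_dec Nat.eq_dec n S); split; intros; tauto || discriminate. Qed.

Definition restrict_base (f : nat -> term G) (S : list nat) (B : base G) : base G :=
  map (fun p => (fst p, subst_ty f (snd p))) (filter (fun p => notin_b S (fst p)) B).

Lemma restrict_base_perm f S B1 B2 :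
  Permutation B1 B2 -> Permutation (restrict_base f S B1) (restrict_base f S B2).
Proof.
  intro H; apply Permutation_map; induction H; simpl; auto.
  - destruct (notin_b S (fst x)); auto.
  - destruct (notin_b S (fst x)), (notin_b S (fst y)); auto using perm_swap.
  - eapply perm_trans; eauto.
Qed.

Lemma restrict_base_cons f S x s B : ~ In x S ->
  restrict_base f S ((x, s) :: B) = (x, subst_ty f s) :: restrict_base f S B.
Proof. intro H; unfold restrict_base; simpl; apply notin_bP in H; rewrite H; auto. Qed.

Lemma in_restrict_base f S B p : In p (restrict_base f S B) ->
  exists q, In q B /\ ~ In (fst q) S /\ p = (fst q, subst_ty f (snd q)).
Proof.
  unfold restrict_base; intro H; apply in_map_iff in H as [q [<- Hq]].
  apply filter_In in Hq as [Hq HqS]; apply notin_bP in HqS; eauto.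
Qed.

Lemma restrict_base_fst f S B :
  map fst (restrict_base f S B) = filter (notin_b S) (map fst B).
Proof. unfold restrict_base; rewrite map_map, filter_map_swap; auto. Qed.

Lemma NoDup_restrict_base f S B : NoDup (map fst B) -> NoDup (map fst (restrict_base f S B)).
Proof. rewrite restrict_base_fst; apply NoDup_filter. Qed.

Lemma in_restrict_base_fst f S B n :
  In n (map fst (restrict_base f S B)) -> In n (map fst B) /\ ~ In n S.
Proof. rewrite restrict_base_fst, filter_In, notin_bP; auto. Qed.

Lemma restrict_base_circuit_free f S B :
  (forall p, In p B -> circuit_free (snd p) = true) ->
  forall p, In p (restrict_base f S B) -> circuit_free (snd p) = true.
Proof.
  intros H p Hp; apply in_restrict_base in Hp as [q [Hq [_ ->]]]; simpl.
  rewrite circuit_free_subst; auto.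
Qed.

Lemma restrict_base_wft f S B :
  (forall p, In p B -> wft ar B (snd p)) ->
  forall p, In p (restrict_base f S B) -> wft ar (restrict_base f S B) (snd p).
Proof.
  intros HB p Hp; apply wft_circuit_free.
  eapply restrict_base_circuit_free; eauto using wf_base_circuit_free.
Qed.

Lemma restrict_base_nil f S (B : base G) :
  (forall p, In p B -> In (fst p) S) -> restrict_base f S B = [].
Proof.
  intro H; unfold restrict_base; induction B as [|p B IH]; simpl; auto.
  destruct (notin_b S (fst p)) eqn:E; [apply notin_bP in E; exfalso; apply E, H; left; auto |].
  apply IH; intros; apply H; right; auto.
Qed.

Record closing_subst (f : nat -> term G) (S : list nat) (B : base G) : Prop := {
  cs_lc : lc_map f;
  cs_id : forall n, ~ In n S -> f n = FVar n;
  cs_dom : forall n, In n S -> In n (map fst B);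
  cs_closed : forall n, In n S -> fv_t (f n) = [];
  cs_typed : forall y s, In (y, s) B -> In y S ->
    fv_ty (subst_ty f s) = [] /\ inhabited (typing ar [] (f y) (subst_ty f s)) }.

Lemma closing_subst_cons f S B x s : closing_subst f S B -> ~ In x (map fst B) ->
  closing_subst f S ((x, s) :: B) /\ ~ In x S.
Proof.
  intros [Hlc Hid Hdom Hcl Hty] Hx.
  assert (HxS : ~ In x S) by (intro; apply Hx; auto).
  split; auto; split; simpl; auto.
  intros y s0 [Heq|Hy] HyS; [injection Heq as -> ->; tauto | eauto].
Qed.

Lemma closing_subst_perm f S B x s B' : closing_subst f S B' ->
  Permutation B' ((x, s) :: B) -> ~ In x S -> closing_subst f S B.
Proof.
  intros [Hlc Hid Hdom Hcl Hty] Hperm HxS; split; auto.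
  - intros n Hn; specialize (Hdom n Hn).
    apply (Permutation_in _ (Permutation_map fst Hperm)) in Hdom as [Heq|]; simpl in *; subst; tauto.
  - intros y s0 Hy; apply Hty, (Permutation_in _ (Permutation_sym Hperm)); right; auto.
Qed.

Lemma fv_subst_closing f S B : closing_subst f S B ->
  (forall (t : term G) x, In x (fv_t (subst_t f t)) -> In x (fv_t t)) /\
  (forall (s : ty G) x, In x (fv_ty (subst_ty f s)) -> In x (fv_ty s)).
Proof.
  intros [_ Hid _ Hcl _].
  assert (Hm : forall m x, In x (fv_t (f m)) -> x = m).
  { intros m x Hx; destruct (in_dec Nat.eq_dec m S) as [Hm|Hm].
    - rewrite Hcl in Hx; auto; contradiction.
    - rewrite Hid in Hx; auto; destruct Hx as [<-|[]]; auto. }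
  split; intros t x Hx.
  - destruct ((proj1 fv_subst) t f x Hx) as [m [Hmt Hxm]]; rewrite (Hm m x Hxm); auto.
  - destruct ((proj2 fv_subst) t f x Hx) as [m [Hmt Hxm]]; rewrite (Hm m x Hxm); auto.
Qed.

Lemma typing_subst_var B B' x s f S :
  NoDup (map fst ((x, s) :: B)) -> Permutation B' ((x, s) :: B) ->
  (forall p, In p B -> wft ar B (snd p)) ->
  (closing_subst f S B -> inhabited (wft ar (restrict_base f S B) (subst_ty f s))) ->
  closing_subst f S B' -> inhabited (typing ar (restrict_base f S B') (f x) (subst_ty f s)).
Proof.
  intros Hnd Hperm Wb IHw Hf.
  assert (HCF := wf_base_circuit_free ar B Wb).
  assert (HndB' : NoDup (map fst B'))
    by (eapply Permutation_NoDup; [apply Permutation_map, Permutation_sym; eauto | auto]).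
  destruct (in_dec Nat.eq_dec x S) as [Hx|Hx].
  - destruct (cs_typed _ _ _ Hf x s) as [Hfv [Dx]]; auto.
    { eapply Permutation_in; [apply Permutation_sym; eauto | left; auto]. }
    apply (closed_typing_weaken ar _ _ Dx); auto using NoDup_restrict_base.
    { apply (cs_closed _ _ _ Hf); auto. }
    intros p Hp; apply in_restrict_base in Hp as [q [Hq [HqS ->]]]; simpl.
    rewrite circuit_free_subst.
    apply (Permutation_in _ Hperm) in Hq as [<-|]; simpl in *; [tauto | auto].
  - destruct (IHw (closing_subst_perm _ _ _ _ _ _ Hf Hperm Hx)) as [w'].
    rewrite (cs_id _ _ _ Hf x Hx); constructor.
    apply (T_var ar (restrict_base f S B) (restrict_base f S B') x (subst_ty f s));
      try rewrite <- restrict_base_cons by auto; auto using restrict_base_wft.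
    + apply NoDup_restrict_base; auto.
    + apply restrict_base_perm; auto.
Qed.

Lemma typing_subst :
  (forall B M t (D : typing ar B M t), forall f S, closing_subst f S B ->
     inhabited (typing ar (restrict_base f S B) (subst_t f M) (subst_ty f t))) /\
  (forall B s (W : wft ar B s), forall f S, closing_subst f S B ->
     inhabited (wft ar (restrict_base f S B) (subst_ty f s))).
Proof.
  apply typing_wft_ind; simpl.
  - intros B B' x s Hnd Hperm Wb _ w IHw f S Hf; apply typing_subst_var with B; auto.
  - intros B x s N t Hx HxN Hxt D IH f S Hf.
    destruct (closing_subst_cons f S B x s Hf Hx) as [Hf' HxS].
    destruct (IH f S Hf') as [D1].
    rewrite restrict_base_cons, subst_open_t, subst_open_ty in D1 by (auto; apply (cs_lc _ _ _ Hf)).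
    simpl in D1; rewrite (cs_id _ _ _ Hf x HxS) in D1.
    constructor; apply (T_lam ar _ x _ _ _); auto.
    + intro Hc; apply in_restrict_base_fst in Hc; tauto.
    + intro Hc; apply ((proj1 (fv_subst_closing _ _ _ Hf)) _ _) in Hc; auto.
    + intro Hc; apply ((proj2 (fv_subst_closing _ _ _ Hf)) _ _) in Hc; auto.
  - intros B P Q s t DP IHP DQ IHQ f S Hf.
    destruct (IHP f S Hf) as [DP'], (IHQ f S Hf) as [DQ'].
    rewrite subst_open_ty by (apply (cs_lc _ _ _ Hf)); constructor; eapply T_app; eauto.
  - intros B c s Hnd Wb _ Hc f S Hf.
    destruct (const_ty_subst ar f _ _ Hc) as [-> ->].
    constructor; apply T_const; auto using NoDup_restrict_base, restrict_base_wft.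
  - intros B E D IH f S Hf; destruct (IH f S Hf) as [D']; constructor; apply T_ifc; auto.
  - intros B s Hnd Wb _ w IHw Hy f S Hf; destruct (IHw f S Hf) as [w'].
    constructor; apply T_Y; auto using NoDup_restrict_base, restrict_base_wft.
    apply yshape_subst; auto; apply (cs_lc _ _ _ Hf).
  - intros B M D IH f S Hf; destruct (IH f S Hf) as [D']; constructor; apply T_idxnat; auto.
  - intros B o E0 E1 D0 IH0 D1 IH1 f S Hf; destruct (IH0 f S Hf) as [D0'], (IH1 f S Hf) as [D1'].
    constructor; apply T_op; auto.
  - intros B M E D IH f S Hf; destruct (IH f S Hf) as [D']; constructor; eapply T_size; eauto.
  - intros B E D IH f S Hf; destruct (IH f S Hf) as [D']; constructor; apply T_seq; auto.
  - intros B E0 E1 D0 IH0 D1 IH1 f S Hf; destruct (IH0 f S Hf) as [D0'], (IH1 f S Hf) as [D1'].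
    constructor; apply T_par; auto.
  - intros B E D IH f S Hf; destruct (IH f S Hf) as [D']; constructor; apply T_rev; auto.
  - intros B E0 E1 D0 IH0 D1 IH1 f S Hf; destruct (IH0 f S Hf) as [D0'], (IH1 f S Hf) as [D1'].
    constructor; apply T_iter; auto.
  - intros B E D IH f S Hf; destruct (IH f S Hf) as [D']; constructor; apply T_dmeas; auto.
  - intros B M s t D IH Heq f S Hf; destruct (IH f S Hf) as [D'].
    constructor; eapply T_conv; eauto; apply tyeq_subst; auto; apply (cs_lc _ _ _ Hf).
  - constructor; apply W_nat.
  - constructor; apply W_idx.
  - intros B E D IH f S Hf; destruct (IH f S Hf) as [D']; constructor; apply W_circ; auto.
  - intros B x s t Hx Hxt W1 IH1 W2 IH2 f S Hf.
    destruct (closing_subst_cons f S B x s Hf Hx) as [Hf' HxS].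
    destruct (IH1 f S Hf) as [W1'], (IH2 f S Hf') as [W2'].
    rewrite restrict_base_cons, subst_open_ty in W2' by (auto; apply (cs_lc _ _ _ Hf)).
    simpl in W2'; rewrite (cs_id _ _ _ Hf x HxS) in W2'.
    constructor; apply (W_pi ar _ x _ _); auto.
    + intro Hc; apply in_restrict_base_fst in Hc; tauto.
    + intro Hc; apply ((proj2 (fv_subst_closing _ _ _ Hf)) _ _) in Hc; auto.
Qed.

End ClosingSubstitution.

(** * Reducibility *)

Section Reducibility.
Context {G : Type}.
Variable ar : G -> nat.
Variable dag : G -> G.
Variable mprob : nat -> term G -> nat -> nat -> R.

Notation evaluates M := (exists k, eval ar dag mprob M 1%R (Num k)).

(** Types are identified up to [tyeq], so a circuit index only has to be convertible to an
    evaluating one. *)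
Definition good_index (E : term G) : Prop :=
  exists E' k, tyeq (TCirc E) (TCirc E') /\ eval ar dag mprob E' 1%R (Num k).

(** Fuel replaces structural recursion, since the codomain [open_ty 0 N b] is not a subterm of
    [TPi a b], only smaller in [tsize]; any fuel above [tsize t] gives the same relation. *)
Fixpoint reducible_fuel (n : nat) (t : ty G) (M : term G) {struct n} : Prop :=
  match n with
  | 0 => False
  | S n' =>
    closed M /\ inhabited (typing ar [] M t) /\
    match t with
    | TNat => True
    | TIdx => evaluates M
    | TCirc E => good_index E
    | TPi a b => forall N, reducible_fuel n' a N -> reducible_fuel n' (open_ty 0 N b) (App M N)
    end
  end.

Definition reducible (t : ty G) (M : term G) : Prop := reducible_fuel (tsize t) t M.

Lemma reducible_fuel_irrel n : forall m t M, tsize t <= n -> tsize t <= m ->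
  (reducible_fuel n t M <-> reducible_fuel m t M).
Proof.
  induction n; intros m t M Hn Hm; [pose proof (tsize_pos t); lia|].
  destruct m; [pose proof (tsize_pos t); lia|].
  simpl; destruct t as [| | |a b]; try tauto; simpl in Hn, Hm.
  assert (Harg : forall N, (reducible_fuel n a N -> reducible_fuel n (open_ty 0 N b) (App M N)) <->
                  (reducible_fuel m a N -> reducible_fuel m (open_ty 0 N b) (App M N))).
  { intro N; rewrite (IHn m a N), (IHn m (open_ty 0 N b) (App M N)) by (rewrite ?tsize_open; lia).
    tauto. }
  split; intros [? [? H]]; split; auto; split; auto; intros; apply Harg; auto.
Qed.

Lemma reducible_fuel_reducible n t M : tsize t <= n -> (reducible_fuel n t M <-> reducible t M).
Proof. intros; apply reducible_fuel_irrel; lia. Qed.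

Lemma reducible_closed_typing t M : reducible t M ->
  closed M /\ inhabited (typing ar [] M t).
Proof.
  unfold reducible; destruct (tsize t) eqn:E; simpl; [pose proof (tsize_pos t); lia | tauto].
Qed.

Lemma reducible_closed t M : reducible t M -> closed M.
Proof. apply reducible_closed_typing. Qed.

Lemma reducible_typing t M : reducible t M -> inhabited (typing ar [] M t).
Proof. apply reducible_closed_typing. Qed.

Lemma reducible_nat M : reducible TNat M <-> closed M /\ inhabited (typing ar [] M TNat).
Proof. unfold reducible; simpl; tauto. Qed.

Lemma reducible_idx M :
  reducible TIdx M <-> closed M /\ inhabited (typing ar [] M TIdx) /\ evaluates M.
Proof. unfold reducible; simpl; tauto. Qed.

Lemma reducible_circ E M :
  reducible (TCirc E) M <-> closed M /\ inhabited (typing ar [] M (TCirc E)) /\ good_index E.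
Proof. unfold reducible; simpl; tauto. Qed.

Lemma reducible_pi a b M : reducible (TPi a b) M <->
  closed M /\ inhabited (typing ar [] M (TPi a b)) /\
  forall N, reducible a N -> reducible (open_ty 0 N b) (App M N).
Proof.
  unfold reducible at 1; simpl.
  assert (Harg : forall N,
    (reducible_fuel (tsize a + tsize b) a N ->
     reducible_fuel (tsize a + tsize b) (open_ty 0 N b) (App M N)) <->
    (reducible a N -> reducible (open_ty 0 N b) (App M N))).
  { intro N; rewrite !reducible_fuel_reducible by (rewrite ?tsize_open; lia); tauto. }
  split; intros [? [? H]]; split; auto; split; auto; intros; apply Harg; auto.
Qed.

Lemma good_index_of_reducible E M : reducible (TCirc E) M -> good_index E.
Proof. intros H; apply reducible_circ in H as [_ [_ H]]; exact H. Qed.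

Definition tyeq_head (u v : ty G) : Prop :=
  match u, v with
  | TNat, TNat | TIdx, TIdx => True
  | TCirc E, TCirc E' => clos_refl_sym_trans _ tstep E E'
  | TPi a b, TPi a' b' => tyeq a a' /\ forall N, lc_t 0 N -> tyeq (open_ty 0 N b) (open_ty 0 N b')
  | _, _ => False
  end.

Lemma tystep_open_fresh (b b' : ty G) x N :
  ~ In x (fv_ty b) -> ~ In x (fv_ty b') -> lc_t 0 N ->
  tystep (open_ty 0 (FVar x) b) (open_ty 0 (FVar x) b') -> tystep (open_ty 0 N b) (open_ty 0 N b').
Proof.
  intros Hb Hb' HN H.
  assert (Hlc : lc_map (@FVar G)) by (intro; simpl; auto).
  apply (proj2 step_subst) with (f := upd FVar x N) in H; [|apply lc_map_upd; auto].
  rewrite !subst_ty_open_upd, !(proj2 subst_FVar) in H by auto; exact H.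
Qed.

Lemma tyeq_tyeq_head (u v : ty G) : tyeq u v -> tyeq_head u v.
Proof.
  intro H; induction H as [u v H| u | u v _ IH | u w v _ IH1 _ IH2].
  - destruct H; simpl.
    + apply rst_step; auto.
    + split; [apply rst_step; auto | intros; apply rst_refl].
    + split; [apply rst_refl |]; intros; apply rst_step; eapply tystep_open_fresh; eauto.
  - destruct u; simpl; auto; try apply rst_refl; split; intros; apply rst_refl.
  - destruct u, v; simpl in *; try tauto; try (apply rst_sym; auto).
    destruct IH as [Ha Hb]; split; [apply rst_sym; auto | intros; apply rst_sym, Hb; auto].
  - destruct u, w, v; simpl in *; try tauto; try (eapply rst_trans; eauto).
    destruct IH1 as [Ha1 Hb1], IH2 as [Ha2 Hb2].
    split; [eapply rst_trans; eauto | intros; eapply rst_trans; [apply Hb1 | apply Hb2]; auto].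
Qed.

Lemma reducible_fuel_tyeq n : forall t t' M, tsize t <= n -> tyeq t t' ->
  reducible_fuel n t M -> reducible_fuel n t' M.
Proof.
  induction n; intros t t' M Hs He H; [simpl in H; tauto|].
  assert (HT := tyeq_tyeq_head _ _ He).
  simpl in H |- *; destruct H as [Hc [[D] H]]; split; auto.
  split; [constructor; eapply T_conv; eauto|].
  destruct t, t'; simpl in HT; try tauto.
  - destruct H as [E' [k [HE Hk]]]; exists E', k; split; auto.
    eapply rst_trans; [apply rst_sym; eauto | auto].
  - destruct HT as [Ha Hb]; simpl in Hs; intros N HN.
    assert (Hsa : tsize t'1 = tsize t1) by (symmetry; apply (tyeq_same_shape _ _ Ha)).
    apply IHn with (t := open_ty 0 N t2).
    + rewrite tsize_open; lia.
    + apply Hb; destruct n; [simpl in HN; tauto | apply HN].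
    + apply H, IHn with (t := t'1); auto; [lia | apply rst_sym; auto].
Qed.

Lemma reducible_tyeq t t' M : tyeq t t' -> reducible t M -> reducible t' M.
Proof.
  unfold reducible; intros He H.
  rewrite <- (proj1 (tyeq_same_shape _ _ He)); eapply reducible_fuel_tyeq; eauto.
Qed.

Lemma apps_snoc (M N : term G) Ps : apps M (Ps ++ [N]) = App (apps M Ps) N.
Proof. revert M; induction Ps; simpl; auto. Qed.

Lemma closed_app (M N : term G) : closed (App M N) <-> closed M /\ closed N.
Proof.
  unfold closed; simpl; split.
  - intros [H1 [H2 H3]]; apply app_eq_nil in H1; tauto.
  - intros [[-> H2] [-> H4]]; auto.
Qed.

Lemma reducible_fuel_beta_expand n : forall t s0 (N0 Q : term G) Ps, tsize t <= n ->
  closed (apps (App (Lam s0 N0) Q) Ps) ->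
  inhabited (typing ar [] (apps (App (Lam s0 N0) Q) Ps) t) ->
  reducible_fuel n t (apps (open_t 0 Q N0) Ps) -> reducible_fuel n t (apps (App (Lam s0 N0) Q) Ps).
Proof.
  induction n; intros t s0 N0 Q Ps Hs Hc [D] H; [simpl in H; tauto|].
  simpl in H |- *; destruct H as [_ [_ H]]; split; auto; split; [constructor; auto|].
  destruct t; auto.
  - destruct H as [k Hk]; exists k; apply E_beta; auto.
  - intros N HN; simpl in Hs.
    assert (HNc : closed N /\ inhabited (typing ar [] N t1))
      by (destruct n; simpl in HN; tauto).
    destruct HNc as [HNc [DN]].
    rewrite <- !apps_snoc; apply IHn.
    + rewrite tsize_open; lia.
    + rewrite apps_snoc; apply closed_app; auto.
    + rewrite apps_snoc; constructor; eapply T_app; eauto.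
    + rewrite apps_snoc; apply H; auto.
Qed.

Lemma reducible_beta_expand t s0 (N0 Q : term G) :
  closed (App (Lam s0 N0) Q) -> inhabited (typing ar [] (App (Lam s0 N0) Q) t) ->
  reducible t (open_t 0 Q N0) -> reducible t (App (Lam s0 N0) Q).
Proof. intros; apply (reducible_fuel_beta_expand _ t s0 N0 Q []); auto. Qed.

(** At a Y-shaped type, this is all that reducibility asks beyond closed typing. *)
Fixpoint good_codomain (s : ty G) : Prop :=
  match s with
  | TCirc E => good_index E
  | TPi a b => (exists N, reducible a N) -> good_codomain b
  | _ => True
  end.

Lemma reducible_good_codomain (s : ty G) : yshape s -> good_codomain s ->
  forall M, closed M -> inhabited (typing ar [] M s) -> reducible s M.
Proof.
  intro Hy; induction Hy as [| E | a b Hb Hy IH]; intros HG M Hc HD.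
  - apply reducible_nat; auto.
  - apply reducible_circ; auto.
  - apply reducible_pi; split; auto; split; auto.
    intros N HN; rewrite open_ty_lc0 by auto.
    destruct HD as [D], (reducible_typing _ _ HN) as [DN].
    apply IH; eauto.
    + apply closed_app; split; auto; eapply reducible_closed; eauto.
    + constructor; pose proof (T_app ar [] M N a b D DN) as D'.
      rewrite open_ty_lc0 in D' by auto; exact D'.
Qed.

End Reducibility.

(** * The fundamental lemma *)

Section Fundamental.
Context {G : Type}.
Variable ar : G -> nat.
Variable dag : G -> G.
Variable mprob : nat -> term G -> nat -> nat -> R.

Notation reducible := (reducible ar dag mprob).
Notation good_index := (good_index ar dag mprob).
Notation good_codomain := (good_codomain ar dag mprob).

Definition names_in (B : base G) (l : list nat) : Prop := forall n, In n l -> In n (map fst B).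

Definition scoped_base (B : base G) : Prop := forall p, In p B -> names_in B (fv_ty (snd p)).

Record reducible_subst (g : nat -> term G) (B : base G) : Prop := {
  rs_lc : lc_map g;
  rs_id : forall n, ~ In n (map fst B) -> g n = FVar n;
  rs_red : forall y s, In (y, s) B -> reducible (subst_ty g s) (g y) }.

Lemma reducible_subst_closed g B n : reducible_subst g B -> In n (map fst B) -> closed (g n).
Proof.
  intros Hg Hn; apply in_map_iff in Hn as [[y s] [<- Hy]].
  eapply reducible_closed, (rs_red _ _ Hg); eauto.
Qed.

Lemma fv_reducible_subst g B : reducible_subst g B ->
  (forall t : term G, names_in B (fv_t t) -> fv_t (subst_t g t) = []) /\
  (forall s : ty G, names_in B (fv_ty s) -> fv_ty (subst_ty g s) = []).
Proof.
  intro Hg; split; intros t Ht; apply incl_l_nil; intros n Hn.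
  - destruct ((proj1 fv_subst) t g n Hn) as [m [Hm Hnm]].
    destruct (reducible_subst_closed g B m Hg (Ht m Hm)) as [Hc _]; rewrite Hc in Hnm; contradiction.
  - destruct ((proj2 fv_subst) t g n Hn) as [m [Hm Hnm]].
    destruct (reducible_subst_closed g B m Hg (Ht m Hm)) as [Hc _]; rewrite Hc in Hnm; contradiction.
Qed.

Lemma closing_of_reducible_subst g B :
  scoped_base B -> reducible_subst g B -> closing_subst ar g (map fst B) B.
Proof.
  intros HB Hg; pose proof Hg as [Hlc Hid _]; split; auto.
  - intros n Hn; apply (reducible_subst_closed g B n Hg Hn).
  - intros y s Hy _; split.
    + apply (proj2 (fv_reducible_subst g B Hg)), (HB (y, s) Hy).
    + apply (reducible_typing ar dag mprob), (rs_red _ _ Hg); auto.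
Qed.

Lemma typing_reducible_subst B M t (D : typing ar B M t) g : scoped_base B ->
  reducible_subst g B -> inhabited (typing ar [] (subst_t g M) (subst_ty g t)).
Proof.
  intros HB Hg.
  destruct ((proj1 (typing_subst ar)) B M t D g (map fst B) (closing_of_reducible_subst g B HB Hg))
    as [D'].
  rewrite restrict_base_nil in D'; [constructor; auto |].
  intros; apply in_map; auto.
Qed.

Lemma lc_reducible_subst B M t (D : typing ar B M t) g :
  reducible_subst g B -> lc_t 0 (subst_t g M).
Proof. intro Hg; apply (proj1 (lc_subst g (rs_lc _ _ Hg))); eapply typing_lc; eauto. Qed.

Lemma closed_reducible_subst B M t (D : typing ar B M t) g :
  reducible_subst g B -> names_in B (fv_t M) -> closed (subst_t g M).
Proof.
  intros Hg HM; split; [apply (proj1 (fv_reducible_subst g B Hg)); auto |].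
  eapply lc_reducible_subst; eauto.
Qed.

Lemma reducible_subst_cons g B x s N : reducible_subst g B -> scoped_base B ->
  ~ In x (map fst B) -> names_in B (fv_ty s) -> reducible (subst_ty g s) N ->
  reducible_subst (upd g x N) ((x, s) :: B) /\ scoped_base ((x, s) :: B).
Proof.
  intros [Hlc Hid Hred] HB Hx Hs HN.
  assert (Hfresh : forall t : ty G, names_in B (fv_ty t) -> subst_ty (upd g x N) t = subst_ty g t)
    by (intros t Ht; apply subst_ty_upd_fresh; intro; apply Hx; auto).
  split; [split|].
  - apply lc_map_upd; auto; apply (reducible_closed _ _ _ _ _ HN).
  - intros n Hn; unfold upd; destruct (Nat.eqb_spec n x) as [->|]; [exfalso; apply Hn; left; auto|].
    apply Hid; intro; apply Hn; right; auto.
  - intros y s0 [[= <- <-]|Hy]; [rewrite Hfresh, upd_eq; auto |].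
    rewrite Hfresh by (apply (HB (y, s0) Hy)).
    unfold upd; destruct (Nat.eqb_spec y x) as [->|]; [exfalso; apply Hx; eapply in_map_fst; eauto|].
    auto.
  - intros p [<-|Hp] n Hn; right; [apply Hs | apply (HB p Hp)]; auto.
Qed.

Lemma good_index_eval E k : eval ar dag mprob E 1%R (Num k) -> good_index E.
Proof. intros; exists E, k; split; auto; apply rst_refl. Qed.

Lemma tyeq_circ (a b : term G) : clos_refl_sym_trans _ tstep a b -> tyeq (TCirc a) (TCirc b).
Proof.
  intro H; induction H; [apply rst_step, S_circ; auto | apply rst_refl | apply rst_sym; auto |].
  eapply rst_trans; eauto.
Qed.

Lemma tconv_op o (a a' b b' : term G) :
  clos_refl_sym_trans _ tstep a a' -> clos_refl_sym_trans _ tstep b b' ->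
  clos_refl_sym_trans _ tstep (Op o a b) (Op o a' b').
Proof.
  intros Ha Hb; apply rst_trans with (Op o a' b).
  - induction Ha; [apply rst_step, S_op1; auto | apply rst_refl | apply rst_sym; auto |].
    eapply rst_trans; eauto.
  - induction Hb; [apply rst_step, S_op2; auto | apply rst_refl | apply rst_sym; auto |].
    eapply rst_trans; eauto.
Qed.

Lemma good_index_op o E0 E1 : good_index E0 -> good_index E1 -> good_index (Op o E0 E1).
Proof.
  intros [E0' [k0 [H0 H0']]] [E1' [k1 [H1 H1']]].
  exists (Op o E0' E1'), (opfun o k0 k1); split.
  - apply tyeq_tyeq_head in H0, H1; apply tyeq_circ, tconv_op; auto.
  - replace 1%R with (1 * 1)%R by ring; apply E_op; auto.
Qed.

Lemma good_index_num n : good_index (Num n).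
Proof. apply good_index_eval with n; constructor. Qed.

Definition sem_typed (B : base G) (M : term G) (t : ty G) : Prop :=
  scoped_base B -> names_in B (fv_t M) ->
  forall g, reducible_subst g B -> reducible (subst_ty g t) (subst_t g M).

Definition sem_wf (B : base G) (s : ty G) : Prop :=
  yshape s -> scoped_base B -> names_in B (fv_ty s) ->
  forall g, reducible_subst g B -> good_codomain (subst_ty g s).

Lemma sem_lam B x s N t (D : typing ar ((x, s) :: B) (open_t 0 (FVar x) N) (open_ty 0 (FVar x) t)) :
  ~ In x (map fst B) -> ~ In x (fv_t N) -> ~ In x (fv_ty t) ->
  sem_typed ((x, s) :: B) (open_t 0 (FVar x) N) (open_ty 0 (FVar x) t) ->
  sem_typed B (Lam s N) (TPi s t).
Proof.
  intros Hx HxN Hxt IH HB HM g Hg.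
  pose (DL := T_lam ar B x s N t Hx HxN Hxt D).
  destruct (typing_reducible_subst _ _ _ DL g HB Hg) as [DL'].
  assert (HcL := closed_reducible_subst _ _ _ DL g Hg HM).
  apply reducible_pi; split; auto; split; [constructor; auto |].
  intros Q HQ; assert (HcQ := reducible_closed _ _ _ _ _ HQ).
  assert (Hs : names_in B (fv_ty s)) by (intros n Hn; apply HM; simpl; apply in_or_app; auto).
  destruct (reducible_subst_cons g B x s Q Hg HB Hx Hs HQ) as [Hg' HB'].
  apply reducible_beta_expand.
  - apply closed_app; auto.
  - destruct (reducible_typing _ _ _ _ _ HQ) as [DQ]; constructor; eapply T_app; eauto.
  - assert (HN : names_in ((x, s) :: B) (fv_t (open_t 0 (FVar x) N))).
    { intros m Hm; apply (proj1 fv_open) in Hm as [Hm|[<-|[]]]; simpl; auto.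
      right; apply HM; simpl; apply in_or_app; auto. }
    specialize (IH HB' HN _ Hg').
    rewrite subst_t_open_upd, subst_ty_open_upd in IH by (auto; apply (rs_lc _ _ Hg) || apply HcQ).
    exact IH.
Qed.

Lemma sem_app B P Q s t : sem_typed B P (TPi s t) -> sem_typed B Q s ->
  sem_typed B (App P Q) (open_ty 0 Q t).
Proof.
  intros IHP IHQ HB HM g Hg; simpl.
  assert (HP := IHP HB (fun n H => HM n (in_or_app _ _ _ (or_introl H))) g Hg).
  assert (HQ := IHQ HB (fun n H => HM n (in_or_app _ _ _ (or_intror H))) g Hg).
  apply reducible_pi in HP as [_ [_ HP]].
  rewrite subst_open_ty by (apply (rs_lc _ _ Hg)); auto.
Qed.

Ltac solve_yshape := repeat match goal with
  | |- yshape (TPi _ _) => apply YS_arr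
  | |- yshape TNat => apply YS_nat
  | |- yshape (TCirc _) => apply YS_circ
  | |- lc_ty _ _ => progress simpl
  | |- _ /\ _ => split
  | |- True => exact I
  | H : lc_t 0 ?e |- lc_t _ ?e => eapply (proj1 lc_mono); [exact H | lia]
  end.

Lemma sem_typed_good_codomain B M t (D : typing ar B M t) :
  (forall g, reducible_subst g B -> yshape (subst_ty g t) /\ good_codomain (subst_ty g t)) ->
  sem_typed B M t.
Proof.
  intros Hgood HB HM g Hg.
  destruct (typing_reducible_subst _ _ _ D g HB Hg) as [D'], (Hgood g Hg) as [Hy HG].
  apply reducible_good_codomain; auto; eapply closed_reducible_subst; eauto.
Qed.

Lemma sem_const B c s (D : typing ar B c s) : const_ty ar c s -> sem_typed B c s.
Proof.
  intros Hc HB HM g Hg.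
  destruct (const_ty_subst ar g _ _ Hc) as [-> ->].
  assert (Dc : typing ar [] c s) by (apply T_const; auto; [constructor | intros _ []]).
  assert (Hcl : closed c) by (destruct Hc; split; simpl; auto).
  destruct Hc; try (apply reducible_good_codomain; auto; repeat constructor; fail).
  - apply reducible_idx; repeat split; auto; exists n; constructor.
  - apply reducible_circ; repeat split; auto; apply good_index_num.
Qed.

Lemma sem_Y B s (D : typing ar B (Yc s) (Arr (Arr s s) s)) :
  yshape s -> sem_wf B s -> sem_typed B (Yc s) (Arr (Arr s s) s).
Proof.
  intros Hy IHs HB HM; apply (sem_typed_good_codomain _ _ _ D); auto; intros g Hg; split.
  - assert (Hls : lc_ty 0 (subst_ty g s))
      by (destruct (closed_reducible_subst _ _ _ D g Hg HM) as [_ H]; exact H).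
    assert (Hys : yshape (subst_ty g s)) by (apply yshape_subst; auto; apply (rs_lc _ _ Hg)).
    change (yshape (TPi (TPi (subst_ty g s) (subst_ty g s)) (subst_ty g s))).
    apply YS_arr; auto; eapply (proj2 lc_mono); eauto.
  - simpl; intros _; apply IHs; auto.
Qed.

Lemma sem_iter B E0 E1 : typing ar B E0 TIdx -> typing ar B E1 TIdx ->
  sem_typed B Iter
    (TPi TIdx (TPi (TCirc E0) (TPi (TCirc E1)
       (TCirc (Op OPlus E0 (Op OTimes (Op OPlus (Num 1) E1) (BVar 2))))))).
Proof.
  intros D0 D1 HB HM g Hg.
  destruct (typing_reducible_subst _ _ _ (T_iter ar B E0 E1 D0 D1) g HB Hg) as [DI].
  assert (HE0 := lc_reducible_subst _ _ _ D0 g Hg).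
  assert (HE1 := lc_reducible_subst _ _ _ D1 g Hg).
  simpl in *; apply reducible_pi; split; [split; simpl; auto |]; split; [constructor; auto |].
  intros N HN; assert (HcN := reducible_closed _ _ _ _ _ HN).
  apply reducible_idx in HN as [_ [[DN] [kN HkN]]].
  match goal with |- reducible (open_ty 0 N ?T) _ =>
    assert (Eq : open_ty 0 N T = TPi (TCirc (subst_t g E0)) (TPi (TCirc (subst_t g E1))
       (TCirc (Op OPlus (subst_t g E0) (Op OTimes (Op OPlus (Num 1) (subst_t g E1)) N)))))
      by (simpl; rewrite !open_t_lc0 by auto; auto) end.
  pose proof (T_app ar [] _ _ _ _ DI DN) as DIN; rewrite Eq in DIN |- *.
  apply reducible_good_codomain; auto.
  - destruct HcN; solve_yshape.
  - simpl; intros [M0 HM0] [M1 HM1].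
    apply good_index_of_reducible in HM0, HM1.
    repeat apply good_index_op; auto using good_index_num; eapply good_index_eval; eauto.
  - apply closed_app; split; auto; split; simpl; auto.
Qed.

Lemma sem_idxnat B M : typing ar B M TIdx -> sem_typed B M TIdx -> sem_typed B M TNat.
Proof.
  intros D IH HB HM g Hg.
  specialize (IH HB HM g Hg); apply reducible_idx in IH as [Hc [[D'] _]].
  apply reducible_nat; split; auto; constructor; apply T_idxnat; auto.
Qed.

Lemma sem_op B o E0 E1 : typing ar B E0 TIdx -> typing ar B E1 TIdx ->
  sem_typed B E0 TIdx -> sem_typed B E1 TIdx -> sem_typed B (Op o E0 E1) TIdx.
Proof.
  intros D0 D1 IH0 IH1 HB HM g Hg; simpl.
  assert (Hc := closed_reducible_subst _ _ _ (T_op ar B o E0 E1 D0 D1) g Hg HM).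
  assert (H0 := IH0 HB (fun n H => HM n (in_or_app _ _ _ (or_introl H))) g Hg).
  assert (H1 := IH1 HB (fun n H => HM n (in_or_app _ _ _ (or_intror H))) g Hg).
  apply reducible_idx in H0 as [_ [[D0'] [k0 H0]]], H1 as [_ [[D1'] [k1 H1]]].
  apply reducible_idx; split; auto; split; [constructor; apply T_op; auto |].
  exists (opfun o k0 k1); replace 1%R with (1 * 1)%R by ring; apply E_op; auto.
Qed.

(** The index of a circuit type evaluates even when the circuit itself need not. *)
Lemma sem_size B M E : typing ar B M (TCirc E) -> sem_typed B M (TCirc E) ->
  sem_typed B (App Size M) TIdx.
Proof.
  intros D IH HB HM g Hg; simpl.
  assert (Hc := closed_reducible_subst _ _ _ (T_size ar B M E D) g Hg HM).
  specialize (IH HB (fun n H => HM n (in_or_app _ _ _ (or_intror H))) g Hg).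
  apply reducible_circ in IH as [_ [[D'] [E' [k [HE Hk]]]]].
  apply reducible_idx; split; auto; split; [constructor; eapply T_size; eauto |].
  exists k; apply E_size with (E := E'); auto; constructor; eapply T_conv; eauto.
Qed.

Lemma sem_ifc B E : typing ar B E TIdx ->
  sem_typed B If (Arr TNat (Arr (TCirc E) (Arr (TCirc E) (TCirc E)))).
Proof.
  intro D; apply (sem_typed_good_codomain _ _ _ (T_ifc ar B E D)); intros g Hg.
  assert (HE := lc_reducible_subst _ _ _ D g Hg); split; simpl; [solve_yshape |].
  intros _ [N HN] _; eapply good_index_of_reducible; eauto.
Qed.

Lemma sem_seq B E : typing ar B E TIdx -> sem_typed B Seq (Arr (TCirc E) (Arr (TCirc E) (TCirc E))).
Proof.
  intro D; apply (sem_typed_good_codomain _ _ _ (T_seq ar B E D)); intros g Hg.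
  assert (HE := lc_reducible_subst _ _ _ D g Hg); split; simpl; [solve_yshape |].
  intros [N HN] _; eapply good_index_of_reducible; eauto.
Qed.

Lemma sem_par B E0 E1 : typing ar B E0 TIdx -> typing ar B E1 TIdx ->
  sem_typed B Par (Arr (TCirc E0) (Arr (TCirc E1) (TCirc (Op OPlus (Op OPlus E0 E1) (Num 1))))).
Proof.
  intros D0 D1; apply (sem_typed_good_codomain _ _ _ (T_par ar B E0 E1 D0 D1)); intros g Hg.
  assert (HE0 := lc_reducible_subst _ _ _ D0 g Hg).
  assert (HE1 := lc_reducible_subst _ _ _ D1 g Hg); split; simpl; [solve_yshape |].
  intros [N0 HN0] [N1 HN1]; apply good_index_of_reducible in HN0, HN1.
  repeat apply good_index_op; auto using good_index_num.
Qed.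

Lemma sem_rev B E : typing ar B E TIdx -> sem_typed B Reverse (Arr (TCirc E) (TCirc E)).
Proof.
  intro D; apply (sem_typed_good_codomain _ _ _ (T_rev ar B E D)); intros g Hg.
  assert (HE := lc_reducible_subst _ _ _ D g Hg); split; simpl; [solve_yshape |].
  intros [N HN]; eapply good_index_of_reducible; eauto.
Qed.

Lemma sem_dmeas B E : typing ar B E TIdx -> sem_typed B DMeas (Arr TNat (Arr (TCirc E) TNat)).
Proof.
  intro D; apply (sem_typed_good_codomain _ _ _ (T_dmeas ar B E D)); intros g Hg.
  assert (HE := lc_reducible_subst _ _ _ D g Hg); split; simpl; [solve_yshape | auto].
Qed.

Lemma sem_conv B M s t : tyeq s t -> sem_typed B M s -> sem_typed B M t.
Proof.
  intros Heq IH HB HM g Hg; eapply reducible_tyeq; [| apply IH; auto].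
  apply tyeq_subst; auto; apply (rs_lc _ _ Hg).
Qed.

Lemma sem_wf_circ B E : sem_typed B E TIdx -> sem_wf B (TCirc E).
Proof.
  intros IH _ HB HE g Hg; simpl.
  specialize (IH HB HE g Hg); apply reducible_idx in IH as [_ [_ [k Hk]]].
  eapply good_index_eval; eauto.
Qed.

Lemma sem_wf_pi B x s t : ~ In x (map fst B) -> ~ In x (fv_ty t) ->
  sem_wf ((x, s) :: B) (open_ty 0 (FVar x) t) -> sem_wf B (TPi s t).
Proof.
  intros Hx Hxt IH Hy HB Hst g Hg [N HN]; simpl.
  inversion Hy as [| | a b Hlct Hyt]; subst.
  assert (Hs : names_in B (fv_ty s)) by (intros m Hm; apply Hst; simpl; apply in_or_app; auto).
  destruct (reducible_subst_cons g B x s N Hg HB Hx Hs HN) as [Hg' HB'].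
  rewrite open_ty_lc0 in IH by auto.
  assert (Ht : names_in ((x, s) :: B) (fv_ty t))
    by (intros m Hm; right; apply Hst; simpl; apply in_or_app; auto).
  specialize (IH Hyt HB' Ht _ Hg'); rewrite subst_ty_upd_fresh in IH; auto.
Qed.

Theorem fundamental :
  (forall B M t (D : typing ar B M t), sem_typed B M t) /\
  (forall B s (W : wft ar B s), sem_wf B s).
Proof.
  apply typing_wft_ind.
  - intros B B' x s _ Hperm _ _ _ _ _ _ g Hg; simpl.
    apply (rs_red _ _ Hg), (Permutation_in _ (Permutation_sym Hperm)); left; auto.
  - intros; eapply sem_lam; eauto.
  - intros; eapply sem_app; eauto.
  - intros B c s Hnd Wb _ Hc; exact (sem_const B c s (T_const ar B c s Hnd Wb Hc) Hc).
  - intros; apply sem_ifc; auto.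
  - intros; apply sem_Y; auto; apply T_Y; auto.
  - intros; apply sem_idxnat; auto.
  - intros; apply sem_op; auto.
  - intros; eapply sem_size; eauto.
  - intros; apply sem_seq; auto.
  - intros; apply sem_par; auto.
  - intros; apply sem_rev; auto.
  - intros; apply sem_iter; auto.
  - intros; apply sem_dmeas; auto.
  - intros; eapply sem_conv; eauto.
  - intros B _ _ _ g _; exact I.
  - intros B Hy; inversion Hy.
  - intros; apply sem_wf_circ; auto.
  - intros; eapply sem_wf_pi; eauto.
Qed.

Lemma closed_index_evaluates E : closed E -> typing ar [] E TIdx ->
  exists n, eval ar dag mprob E 1%R (Num n).
Proof.
  intros [HEfv _] D.
  assert (Hid : reducible_subst FVar []) by (split; [intro; simpl | | intros ? ? []]; auto).
  assert (HB : scoped_base []) by (intros ? []).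
  assert (HE : names_in [] (fv_t E)) by (rewrite HEfv; intros ? []).
  pose proof ((proj1 fundamental) [] E TIdx D HB HE FVar Hid) as HR.
  rewrite (proj1 subst_FVar) in HR.
  apply reducible_idx in HR as [_ [_ Hev]]; exact Hev.
Qed.

End Fundamental.

Theorem corollary1 (G : Type) (ar : G -> nat) (dag : G -> G)
  (Hdag : forall g, ar (dag g) = ar g)
  (mprob : nat -> term G -> nat -> nat -> R)
  (E : term G) :
  closed E ->
  inhabited (typing ar nil E TIdx) ->
  (exists n, eval ar dag mprob E 1%R (Num n)) /\
  (forall (B : base G) (M : term G) (s : ty G) (D : typing ar B M s) (r : ty G),
      tyeq r (TCirc E) -> occ_d r D ->
      exists n, eval ar dag mprob E 1%R (Num n)).
Proof.
  intros HE [D].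
  assert (Hev := closed_index_evaluates ar dag mprob E HE D).
  (* Part (2) concludes about the same closed [E], so it is part (1) again. *)
  split; auto.
Qed.
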